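(* Let $B=\begin{pmatrix}0&1\\1&0\end{pmatrix}$, let $P\in(C^1[0,\infty))^{2\times2}$ be complex-valued, and let $Q$ be a $2\times2$ complex matrix with $QB+BQ=B$ and $Q^2=Q$. For $\lambda\in\mathbb{C}$ let $\varphi,\widetilde\varphi$ be the $2\times2$ matrix solutions of $$B\varphi'(x)+P(x)\varphi(x)=\lambda\varphi(x),\ \varphi(0)=Q;\qquad -\widetilde\varphi'(x)B+\widetilde\varphi(x)P(x)=\lambda\widetilde\varphi(x),\ \widetilde\varphi(0)=Q\qquad(0<x<\infty),$$ and let $S,\widetilde S$ be the corresponding solutions with $P$ replaced by $0$. Then for $\rho\in\mathbb{R}$ and $x\ge0$: (1) $S(x,i\rho)=R(P,0)(x)\varphi(x,i\rho)+\int_0^xK(P,0;Q)(x,y)\varphi(y,i\rho)\,dy$, where $K(P,0;Q)\in(C^1(\overline\Omega))^{2\times2}$ satisfies $$BK_x(P,0;Q)(x,y)+K_y(P,0;Q)(x,y)B-K(P,0;Q)(x,y)P(y)=0\ \ ((x,y)\in\Omega),$$ and, for $0\le x<\infty$, $K(P,0;Q)(x,0)Q=K(P,0;Q)(x,0)$ and $K(P,0;Q)(x,x)B-BK(P,0;Q)(x,x)=BR'(P,0)(x)-R(P,0)(x)P(x)$; (2) $\widetilde S(x,i\rho)=\widetilde\varphi(x,i\rho)R(0,P)(x)+\int_0^x\widetilde\varphi(y,i\rho)\overline{K^T(-\overline{P^T},0;\overline{Q^T})(x,y)}\,dy$, where $Q\,\overline{K^T(-\overline{P^T},0;\overline{Q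^T})(x,0)}=\overline{K^T(-\overline{P^T},0;\overline{Q^T})(x,0)}$.
   Context: $\overline{\cdot}$ is complex conjugation, $\cdot^T$ transpose, $i=\sqrt{-1}$, $\Omega=\{(x,y)\in\mathbb{R}^2:0<y<x\}$. For complex-valued $P_1,P_2\in(C^1[0,\infty))^{2\times2}$ with entries $P_{j,kl}$, define $\theta_1(x)=\frac12\int_0^x(P_{2,12}+P_{2,21}-P_{1,12}-P_{1,21})(s)ds$, $\theta_2(x)=\frac12\int_0^x(P_{2,11}+P_{2,22}-P_{1,11}-P_{1,22})(s)ds$ and $R(P_1,P_2)(x)=e^{-\theta_1(x)}\begin{pmatrix}\cosh\theta_2&-\sinh\theta_2\\-\sinh\theta_2&\cosh\theta_2\end{pmatrix}(x)$. For a $2\times2$ matrix $M$ with $\det M=0$, $K(P_1,P_2;M)$ denotes the unique $K\in(C^1(\overline\Omega))^{2\times2}$ solving $BK_x(x,y)+K_y(x,y)B+P_2(x)K(x,y)-K(x,y)P_1(y)=0$ on $\Omega$, $K(x,0)BM=0$ and $K(x,x)B-BK(x,x)=BR(P_1,P_2)'(x)+P_2(x)R(P_1,P_2)(x)-R(P_1,P_2)(x)P_1(x)$ for $x\ge0$ (such a unique solution exists). *)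

From Stdlib Require Import Reals.
From Coquelicot Require Import Coquelicot.
From Stdlib Require Import List.
Open Scope R_scope.

Definition cexp (z : C) : C :=
  (exp (Re z) * cos (Im z), exp (Re z) * sin (Im z)).
Definition ccosh (z : C) : C := Cmult (RtoC (/2)) (Cplus (cexp z) (cexp (Copp z))).
Definition csinh (z : C) : C := Cmult (RtoC (/2)) (Cminus (cexp z) (cexp (Copp z))).

Definition cint (f : R -> C) (a b : R) : C :=
  @RInt C_R_CompleteNormedModule f a b.

(* derivative of f : R -> C at x, computed within [0, oo)
   (two-sided for x > 0, right derivative at x = 0) *)
Definition cderiv0 (f : R -> C) (x : R) (D : C) : Prop :=
  filterlim (fun y => Cmult (RtoC (/ (y - x))) (Cminus (f y) (f x)))
    (within (fun y => 0 <= y /\ y <> x) (locally x)) (locally D).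

Definition cderiv (f : R -> C) (x : R) (D : C) : Prop :=
  filterlim (fun y => Cmult (RtoC (/ (y - x))) (Cminus (f y) (f x)))
    (within (fun y => y <> x) (locally x)) (locally D).

Record M2 := mkM2 { m11 : C; m12 : C; m21 : C; m22 : C }.

Definition madd (A B : M2) : M2 :=
  (mkM2 (m11 A + m11 B) (m12 A + m12 B) (m21 A + m21 B) (m22 A + m22 B))%C.
Definition mopp (A : M2) : M2 :=
  (mkM2 (- m11 A) (- m12 A) (- m21 A) (- m22 A))%C.
Definition msub (A B : M2) : M2 := madd A (mopp B).
Definition mmul (A B : M2) : M2 :=
  (mkM2 (m11 A * m11 B + m12 A * m21 B) (m11 A * m12 B + m12 A * m22 B)
       (m21 A * m11 B + m22 A * m21 B) (m21 A * m12 B + m22 A * m22 B))%C.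
Definition mscal (c : C) (A : M2) : M2 :=
  (mkM2 (c * m11 A) (c * m12 A) (c * m21 A) (c * m22 A))%C.
Definition mzero : M2 := (mkM2 0 0 0 0)%C.
Definition mconj (A : M2) : M2 :=
  mkM2 (Cconj (m11 A)) (Cconj (m12 A)) (Cconj (m21 A)) (Cconj (m22 A)).
Definition mtr (A : M2) : M2 := mkM2 (m11 A) (m21 A) (m12 A) (m22 A).

Definition Bm : M2 := (mkM2 0 1 1 0)%C.

Definition mint (f : R -> M2) (a b : R) : M2 :=
  mkM2 (cint (fun s => m11 (f s)) a b) (cint (fun s => m12 (f s)) a b)
       (cint (fun s => m21 (f s)) a b) (cint (fun s => m22 (f s)) a b).

Definition entries : list (M2 -> C) := m11 :: m12 :: m21 :: m22 :: nil.

Definition mderiv0 (f : R -> M2) (x : R) (D : M2) : Prop :=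
  forall e, In e entries -> cderiv0 (fun s => e (f s)) x (e D).
Definition mderiv (f : R -> M2) (x : R) (D : M2) : Prop :=
  forall e, In e entries -> cderiv (fun s => e (f s)) x (e D).

Definition mcont0 (f : R -> M2) (x : R) : Prop :=
  forall e, In e entries ->
    filterlim (fun s => e (f s)) (within (fun y => 0 <= y) (locally x)) (locally (e (f x))).

Definition C1_nonneg (P : R -> M2) : Prop :=
  exists dP : R -> M2,
    (forall x, 0 <= x -> mderiv0 P x (dP x)) /\
    (forall x, 0 <= x -> mcont0 dP x).

Definition Omega (p : R * R) : Prop := 0 < snd p < fst p.
Definition Omega_bar (p : R * R) : Prop := 0 <= snd p <= fst p.

Definition mcont_Obar (K : R -> R -> M2) (x y : R) : Prop :=
  forall e, In e entries ->
    filterlim (fun p : R * R => e (K (fst p) (snd p)))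
      (within Omega_bar (locally (x, y))) (locally (e (K x y))).

Definition theta1 (P1 P2 : R -> M2) (x : R) : C :=
  Cmult (RtoC (/2)) (cint (fun s => (m12 (P2 s) + m21 (P2 s) - m12 (P1 s) - m21 (P1 s))%C) 0 x).
Definition theta2 (P1 P2 : R -> M2) (x : R) : C :=
  Cmult (RtoC (/2)) (cint (fun s => (m11 (P2 s) + m22 (P2 s) - m11 (P1 s) - m22 (P1 s))%C) 0 x).

Definition Rmat (P1 P2 : R -> M2) (x : R) : M2 :=
  let t1 := theta1 P1 P2 x in let t2 := theta2 P1 P2 x in
  mscal (cexp (Copp t1))
    (mkM2 (ccosh t2) (Copp (csinh t2)) (Copp (csinh t2)) (ccosh t2)).

(** * The kernel K(P1,P2;M): characterization of the (unique) solution. *)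
Definition is_kernel (P1 P2 : R -> M2) (M : M2) (K : R -> R -> M2) : Prop :=
  (exists Kx Ky : R -> R -> M2,
     (forall x y, Omega_bar (x, y) ->
        mcont_Obar K x y /\ mcont_Obar Kx x y /\ mcont_Obar Ky x y) /\
     (forall x y, Omega (x, y) ->
        mderiv (fun t => K t y) x (Kx x y) /\ mderiv (fun s => K x s) y (Ky x y)) /\
     (forall x y, Omega (x, y) ->
        madd (madd (mmul Bm (Kx x y)) (mmul (Ky x y) Bm))
             (msub (mmul (P2 x) (K x y)) (mmul (K x y) (P1 y))) = mzero)) /\
  (forall x, 0 <= x -> mmul (mmul (K x 0) Bm) M = mzero) /\
  (forall x, 0 <= x -> forall dR, mderiv0 (Rmat P1 P2) x dR ->
     msub (mmul (K x x) Bm) (mmul Bm (K x x)) =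
     msub (madd (mmul Bm dR) (mmul (P2 x) (Rmat P1 P2 x))) (mmul (Rmat P1 P2 x) (P1 x))).

Definition is_sol (P : R -> M2) (Q : M2) (lam : C) (f : R -> M2) : Prop :=
  f 0 = Q /\ (forall x, 0 <= x -> mcont0 f x) /\
  (forall x, 0 < x -> exists D, mderiv0 f x D /\
     madd (mmul Bm D) (mmul (P x) (f x)) = mscal lam (f x)).

Definition is_sol_tilde (P : R -> M2) (Q : M2) (lam : C) (f : R -> M2) : Prop :=
  f 0 = Q /\ (forall x, 0 <= x -> mcont0 f x) /\
  (forall x, 0 < x -> exists D, mderiv0 f x D /\
     madd (mopp (mmul D Bm)) (mmul (f x) (P x)) = mscal lam (f x)).

Definition Pzero : R -> M2 := fun _ => mzero.

(* For lambda = i rho with rho real, both sides of (1) solve the Cauchy problem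
   B g' = lambda g, g(0) = Q.  Differentiating x |-> R(x) phi(x) + int_0^x K(x,y) phi(y) dy
   with the Leibniz rule and integrating the K_y B phi term by parts, the kernel equation,
   the boundary condition K(x,0) B Q = 0 and the diagonal condition cancel every term
   involving P.  The Cauchy problem has a unique solution: for each column (u, v) of a
   solution with zero initial value, u + v and u - v solve c' = +- i rho c, along which
   |c|^2 is constant.  K(x,0) Q = K(x,0) follows from K(x,0) B Q = 0 and QB + BQ = B.
   Statement (2) is (1) for conjugate transposes: if phi~ solves the tilde equation with
   potential P, then phi~^* solves the plain equation with potential -P^*, initial value
   Q^* and spectral parameter i rho again, so (1) applies with the kernel built from
   -P^* and Q^*; finally R(-P^*, 0)^* = R(0, P). *)

From Stdlib Require Import Reals Lra List.
From Coquelicot Require Import Coquelicot.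
Open Scope R_scope.

(** * Real-valued functions of a real variable *)

Ltac ring_R := cbv beta; match goal with |- ?a = ?b => change (a = b :> R) end; ring.
Ltac field_R := match goal with |- ?a = ?b => change (a = b :> R) end; field.

Lemma ball_R (x e y : R) : ball x e y <-> Rabs (y - x) < e.
Proof. reflexivity. Qed.

Lemma continuity_pt_of_is_derive (f : R -> R) x l : is_derive f x l -> continuity_pt f x.
Proof.
  intros H. apply continuity_pt_filterlim, (ex_derive_continuous f x). now exists l.
Qed.

Lemma ex_RInt_of_continuity (f : R -> R) a b : (forall t, continuity_pt f t) -> ex_RInt f a b.
Proof.
  intros H. apply (@ex_RInt_continuous R_CompleteNormedModule).
  intros z _. now apply continuity_pt_filterlim.
Qed.

Lemma continuity_pt_cst (c t : R) : continuity_pt (fun _ => c) t.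
Proof. apply continuity_pt_const. now intros ? ?. Qed.

Lemma is_derive_eq (f : R -> R) x l l' : is_derive f x l -> l = l' -> is_derive f x l'.
Proof. now intros H <-. Qed.

Lemma locally_gt (t c : R) : c < t -> locally t (fun u => c < u).
Proof.
  intros H. exists (mkposreal (t - c) ltac:(lra)). intros u Hu.
  change (Rabs (u - t) < t - c) in Hu. destruct (Rabs_def2 _ _ Hu). lra.
Qed.

Lemma locally_lt (t c : R) : t < c -> locally t (fun u => u < c).
Proof.
  intros H. exists (mkposreal (c - t) ltac:(lra)). intros u Hu.
  change (Rabs (u - t) < c - t) in Hu. destruct (Rabs_def2 _ _ Hu). lra.
Qed.

Lemma locally_abs_lt (d : R) : 0 < d -> locally 0 (fun h => Rabs h < d).
Proof.
  intros Hd. exists (mkposreal d Hd). intros h Hh.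
  change (Rabs (h - 0) < d) in Hh. now rewrite Rminus_0_r in Hh.
Qed.

Lemma eq_of_is_derive_0 (G : R -> R) a b : a < b ->
  (forall t, a < t < b -> is_derive G t 0) ->
  continuity_pt G a -> continuity_pt G b -> G a = G b.
Proof.
  intros Hab Hd Ha Hb.
  destruct (MVT_gen G a b (fun _ => 0)) as [c [_ Hc]]; [| |lra];
    intros t Ht; rewrite Rmin_left, Rmax_right in Ht by lra.
  - auto.
  - destruct (Req_dec t a) as [->|Hta]; auto.
    destruct (Req_dec t b) as [->|Htb]; auto.
    apply (continuity_pt_of_is_derive _ _ 0), Hd; lra.
Qed.

Lemma is_derive_RInt_cont (q : R -> R) a u :
  (forall t, continuity_pt q t) -> is_derive (fun v => RInt q a v) u (q u).
Proof.
  intros Hc. apply (is_derive_RInt q (fun t => RInt q a t) a u).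
  - apply filter_forall. intros v.
    now apply (@RInt_correct R_CompleteNormedModule), ex_RInt_of_continuity.
  - now apply continuity_pt_filterlim.
Qed.

Lemma is_RInt_derive_open (h dh : R -> R) a b : a < b ->
  (forall t, a < t < b -> is_derive h t (dh t)) ->
  (forall t, continuity_pt dh t) ->
  continuity_pt h a -> continuity_pt h b ->
  is_RInt dh a b (h b - h a).
Proof.
  intros Hab Hd Hc Ha Hb.
  assert (HI : forall t, is_derive (fun u => RInt dh a u) t (dh t))
    by (intros; now apply is_derive_RInt_cont).
  assert (HG : RInt dh a a - h a = RInt dh a b - h b).
  { apply (eq_of_is_derive_0 (fun t => RInt dh a t - h t)); [lra|auto| |].
    - intros t Ht. replace 0 with (dh t - dh t) by ring.
      apply (is_derive_minus (fun t => RInt dh a t) h); [apply HI | now apply Hd].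
    - apply continuity_pt_minus; [eapply continuity_pt_of_is_derive, HI | exact Ha].
    - apply continuity_pt_minus; [eapply continuity_pt_of_is_derive, HI | exact Hb]. }
  rewrite RInt_point in HG. change (zero : R) with 0 in HG.
  replace (h b - h a) with (RInt dh a b) by lra.
  now apply (@RInt_correct R_CompleteNormedModule), ex_RInt_of_continuity.
Qed.

Lemma continuity_pt_2d_r (k : R -> R -> R) u v :
  continuity_2d_pt k u v -> continuity_pt (k u) v.
Proof.
  intros H. apply continuity_pt_filterlim, filterlim_locally. intros eps.
  destruct (H eps) as [d Hd]. exists d. intros y Hy. apply Hd; [|exact Hy].
  rewrite Rminus_eq_0, Rabs_R0. apply cond_pos.
Qed.

Lemma continuity_pt_2d_l (k : R -> R -> R) u v :
  continuity_2d_pt k u v -> continuity_pt (fun t => k t v) u.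
Proof.
  intros H. apply continuity_pt_filterlim, filterlim_locally. intros eps.
  destruct (H eps) as [d Hd]. exists d. intros y Hy. apply Hd; [exact Hy|].
  rewrite Rminus_eq_0, Rabs_R0. apply cond_pos.
Qed.

Lemma abs_RInt_le_open (f : R -> R) a b M : a < b -> ex_RInt f a b ->
  (forall t, a < t < b -> Rabs (f t) <= M) -> Rabs (RInt f a b) <= (b - a) * M.
Proof.
  intros Hab Hex Hb.
  assert (HM : 0 <= M) by (eapply Rle_trans; [apply Rabs_pos | apply (Hb ((a+b)/2)); lra]).
  set (g t := if Rlt_dec a t then if Rlt_dec t b then f t else 0 else 0).
  assert (Hfg : forall t, Rmin a b < t < Rmax a b -> f t = g t).
  { intros t Ht. rewrite Rmin_left, Rmax_right in Ht by lra. unfold g.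
    destruct (Rlt_dec a t); [|lra]. destruct (Rlt_dec t b); [|lra]. reflexivity. }
  rewrite (RInt_ext f g) by auto.
  apply abs_RInt_le_const; [lra| |].
  - destruct Hex as [l Hl]. exists l. now apply (is_RInt_ext f).
  - intros t Ht. unfold g.
    destruct (Rlt_dec a t), (Rlt_dec t b); rewrite ?Rabs_R0; auto.
Qed.

Lemma is_derive_plus_R (f g : R -> R) x df dg : is_derive f x df -> is_derive g x dg ->
  is_derive (fun u => f u + g u) x (df + dg).
Proof. intros Hf Hg. exact (is_derive_plus f g x df dg Hf Hg). Qed.

Lemma is_derive_minus_R (f g : R -> R) x df dg : is_derive f x df -> is_derive g x dg ->
  is_derive (fun u => f u - g u) x (df - dg).
Proof. intros Hf Hg. exact (is_derive_minus f g x df dg Hf Hg). Qed.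

Lemma is_derive_comp_R (f g : R -> R) x df dg : is_derive g x dg -> is_derive f (g x) df ->
  is_derive (fun t => f (g t)) x (df * dg).
Proof.
  intros Hg Hf. eapply is_derive_eq; [apply (is_derive_comp f g x df dg Hf Hg) | apply Rmult_comm].
Qed.

Lemma continuity_pt_ext (f g : R -> R) t :
  (forall x, f x = g x) -> continuity_pt f t -> continuity_pt g t.
Proof.
  intros E H. apply continuity_pt_filterlim. rewrite <- (E t).
  apply (filterlim_ext f); auto. now apply continuity_pt_filterlim.
Qed.

Lemma Rmax_lipschitz2 a b c d :
  Rabs (Rmax a b - Rmax c d) <= Rmax (Rabs (a - c)) (Rabs (b - d)).
Proof.
  unfold Rmax at 1 2. destruct (Rle_dec a b), (Rle_dec c d);
    unfold Rabs; repeat destruct Rcase_abs; unfold Rmax; repeat destruct Rle_dec; lra.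
Qed.

Lemma Rmax_lipschitz c a b : Rabs (Rmax c a - Rmax c b) <= Rabs (a - b).
Proof.
  eapply Rle_trans; [apply Rmax_lipschitz2|]. rewrite Rminus_eq_0, Rabs_R0.
  apply Rmax_lub; [apply Rabs_pos | apply Rle_refl].
Qed.

Lemma continuity_pt_Rmax0 t : continuity_pt (Rmax 0) t.
Proof.
  apply continuity_pt_filterlim, filterlim_locally. intros eps. exists eps.
  intros y Hy. rewrite ball_R in *. eapply Rle_lt_trans; [apply Rmax_lipschitz | exact Hy].
Qed.

Section RIntContinuous.
Variables f g : R -> R.
Hypothesis Hf : forall t, continuity_pt f t.
Hypothesis Hg : forall t, continuity_pt g t.

Lemma RInt_plus_cont a b : RInt (fun t => f t + g t) a b = RInt f a b + RInt g a b.
Proof. apply (RInt_plus f g); now apply ex_RInt_of_continuity. Qed.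

Lemma RInt_minus_cont a b : RInt (fun t => f t - g t) a b = RInt f a b - RInt g a b.
Proof. apply (RInt_minus f g); now apply ex_RInt_of_continuity. Qed.

Lemma RInt_scal_cont c a b : RInt (fun t => c * f t) a b = c * RInt f a b.
Proof. apply (RInt_scal f); now apply ex_RInt_of_continuity. Qed.

Lemma RInt_Chasles_cont a b c : RInt f a b + RInt f b c = RInt f a c.
Proof. apply (RInt_Chasles f); now apply ex_RInt_of_continuity. Qed.

End RIntContinuous.

Lemma RInt_increment_split (f g d : R -> R) c a b m :
  (forall t, continuity_pt f t) -> (forall t, continuity_pt g t) ->
  (forall t, continuity_pt d t) ->
  RInt f 0 b - RInt g 0 a - (b - a) * (c + RInt d 0 a) =
  RInt (fun y => f y - c) m b - RInt (fun y => g y - c) m a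
  + RInt (fun y => f y - g y - (b - a) * d y) 0 m - (b - a) * RInt d m a.
Proof.
  intros Hf Hg Hd.
  assert (Hhd : forall t, continuity_pt (fun y => (b - a) * d y) t)
    by (intros; now apply continuity_pt_scal).
  assert (Hfg : forall t, continuity_pt (fun y => f y - g y) t)
    by (intros; now apply continuity_pt_minus).
  rewrite !RInt_minus_cont, RInt_scal_cont by auto using continuity_pt_cst.
  rewrite !RInt_const. change (scal ?u c) with (u * c).
  rewrite <- (RInt_Chasles_cont f Hf 0 m b), <- (RInt_Chasles_cont g Hg 0 m a),
    <- (RInt_Chasles_cont d Hd 0 m a).
  ring.
Qed.

Lemma MVT_remainder (f df : R -> R) a b e :
  (forall t, Rmin a b < t < Rmax a b -> is_derive f t (df t)) ->
  (forall t, Rmin a b <= t <= Rmax a b -> continuity_pt f t) ->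
  (forall c, Rmin a b <= c <= Rmax a b -> Rabs (df c - df a) <= e) ->
  Rabs (f b - f a - (b - a) * df a) <= Rabs (b - a) * e.
Proof.
  intros Hd Hc He. destruct (MVT_gen f a b df Hd Hc) as [c [Hc' ->]].
  replace (df c * (b - a) - (b - a) * df a) with ((b - a) * (df c - df a)) by ring.
  rewrite Rabs_mult. apply Rmult_le_compat_l; [apply Rabs_pos | auto].
Qed.

Lemma RInt_taylor1_bound (k kx : R -> R -> R) a b m e : 0 < m -> m <= Rmin a b ->
  (forall u y, 0 < y < u -> is_derive (fun t => k t y) u (kx u y)) ->
  (forall u v, continuity_2d_pt k u v) -> (forall u v, continuity_2d_pt kx u v) ->
  (forall c y, 0 < y < m -> Rmin a b <= c <= Rmax a b -> Rabs (kx c y - kx a y) <= e) ->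
  Rabs (RInt (fun y => k b y - k a y - (b - a) * kx a y) 0 m) <= m * (Rabs (b - a) * e).
Proof.
  intros Hm Hmab Hd Hk Hkx He. replace (m * _) with ((m - 0) * (Rabs (b - a) * e)) by ring.
  apply abs_RInt_le_open; [lra| |].
  - apply ex_RInt_of_continuity. intros t.
    repeat apply continuity_pt_minus; try apply continuity_pt_scal; apply continuity_pt_2d_r; auto.
  - intros y Hy. apply (MVT_remainder (fun t => k t y) (fun t => kx t y)).
    + intros t Ht. apply Hd. lra.
    + intros t _. now apply continuity_pt_2d_l.
    + intros c Hc. now apply He.
Qed.

Lemma abs_RInt_sub_le_near (f : R -> R) c a b e : a <= b -> (forall t, continuity_pt f t) ->
  (forall t, a <= t <= b -> Rabs (f t - c) < e) ->
  Rabs (RInt (fun y => f y - c) a b) <= (b - a) * e.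
Proof.
  intros Hab Hf Hc. apply abs_RInt_le_const; [exact Hab | |intros t Ht; left; auto].
  apply ex_RInt_of_continuity. intros t. apply continuity_pt_minus; auto using continuity_pt_cst.
Qed.

Lemma abs_RInt_le_near (f : R -> R) c a b e : a <= b -> (forall t, continuity_pt f t) ->
  (forall t, a <= t <= b -> Rabs (f t - c) < e) -> Rabs (RInt f a b) <= (b - a) * (Rabs c + e).
Proof.
  intros Hab Hf Hc. apply abs_RInt_le_const; [exact Hab | now apply ex_RInt_of_continuity|].
  intros t Ht. generalize (Rabs_triang_inv (f t) c) (Hc t Ht). lra.
Qed.

Lemma Rabs_four_terms_lt T1 T2 T3 T4 h e : 0 < Rabs h ->
  Rabs T1 <= Rabs h * (e / 8) -> Rabs T2 <= Rabs h * (e / 8) ->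
  Rabs T3 <= Rabs h * (e / 16) -> Rabs T4 < e / 8 ->
  Rabs (T1 - T2 + T3 - h * T4) < e * Rabs h.
Proof.
  intros Hh H1 H2 H3 H4.
  assert (He : 0 < e) by (generalize (Rabs_pos T4); lra).
  assert (H4' : Rabs h * Rabs T4 < Rabs h * (e / 8)) by now apply Rmult_lt_compat_l.
  generalize (Rabs_triang (T1 - T2 + T3) (- (h * T4))) (Rabs_triang (T1 - T2) T3)
    (Rabs_triang T1 (- T2)).
  rewrite !Rabs_Ropp, Rabs_mult. unfold Rminus. nra.
Qed.

Lemma is_derive_RInt_diag (k kx : R -> R -> R) x : 0 < x ->
  (forall u v, continuity_2d_pt k u v) -> (forall u v, continuity_2d_pt kx u v) ->
  (forall u y, 0 < y < u -> is_derive (fun t => k t y) u (kx u y)) ->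
  is_derive (fun u => RInt (k u) 0 u) x (k x x + RInt (kx x) 0 x).
Proof.
  intros Hx Hk Hkx Hd. apply is_derive_Reals. intros eps Heps.
  set (M := Rabs (kx x x) + 1).
  assert (HM : 0 < M) by (unfold M; generalize (Rabs_pos (kx x x)); lra).
  destruct (Hk x x (mkposreal (eps / 8) ltac:(lra))) as [d1 Hd1].
  destruct (uniform_continuity_2d kx 0 (2 * x) 0 (2 * x) (fun u v _ _ => Hkx u v)
              (mkposreal (eps / (16 * x)) ltac:(apply Rdiv_lt_0_compat; lra))) as [d2 Hd2].
  destruct (Hkx x x (mkposreal 1 Rlt_0_1)) as [d3 Hd3].
  assert (Hsmall : locally 0 (fun h => Rabs h < x / 2 /\ Rabs h < d1 /\ Rabs h < d2 /\
                                       Rabs h < d3 /\ Rabs h < eps / (8 * M))).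
  { repeat apply filter_and; apply locally_abs_lt;
      try apply cond_pos; try apply Rdiv_lt_0_compat; lra. }
  destruct Hsmall as [d Hsmall]. exists d. intros h Hh0 Hh.
  destruct (Hsmall h) as (Hhx & Hh1 & Hh2 & Hh3 & Hh4).
  { change (Rabs (h - 0) < d). now rewrite Rminus_0_r. }
  assert (Habsh : 0 < Rabs h) by now apply Rabs_pos_lt.
  assert (Hh_abs : - Rabs h <= h <= Rabs h) by now apply Rabs_le_between, Rle_refl.
  set (b := x + h). set (m := Rmin x b).
  assert (Hm : x / 2 < m /\ m <= x /\ m <= b /\ x - m <= Rabs h /\ b - m <= Rabs h /\
               forall c, Rmin x b <= c <= Rmax x b -> Rabs (c - x) <= Rabs h).
  { unfold m, b, Rmin, Rmax. destruct (Rle_dec x (x + h));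
      [rewrite (Rabs_right h) by lra | rewrite (Rabs_left h) by lra];
      repeat split; try lra; intros c Hc; apply Rabs_le_between'; lra. }
  destruct Hm as (Hm1 & Hm2 & Hm3 & Hm4 & Hm5 & Hc).
  assert (Ck : forall u t, continuity_pt (k u) t) by (intros; now apply continuity_pt_2d_r).
  assert (B1 : Rabs (RInt (fun y => k b y - k x x) m b) <= Rabs h * (eps / 8)).
  { eapply Rle_trans; [apply abs_RInt_sub_le_near; auto|apply Rmult_le_compat_r; lra].
    intros t Ht. apply Hd1; simpl; apply Rabs_def1; unfold b; lra. }
  assert (B2 : Rabs (RInt (fun y => k x y - k x x) m x) <= Rabs h * (eps / 8)).
  { eapply Rle_trans; [apply abs_RInt_sub_le_near; auto|apply Rmult_le_compat_r; lra].
    intros t Ht. apply Hd1; simpl; apply Rabs_def1; lra. }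
  assert (B3 : Rabs (RInt (fun y => k b y - k x y - (b - x) * kx x y) 0 m)
               <= Rabs h * (eps / 16)).
  { eapply Rle_trans.
    { apply RInt_taylor1_bound with (e := eps / (16 * x));
        [lra | unfold m; lra | exact Hd | exact Hk | exact Hkx |].
      intros c y Hy Hcb. left. specialize (Hc c Hcb). apply Rabs_le_between' in Hc.
      apply Hd2; try lra; [apply Rabs_def1; lra | rewrite Rminus_eq_0, Rabs_R0; apply cond_pos]. }
    replace (b - x) with h by (unfold b; ring).
    replace (Rabs h * (eps / 16)) with (x * (Rabs h * (eps / (16 * x)))) by (field; lra).
    apply Rmult_le_compat_r; [|lra]. apply Rmult_le_pos; [apply Rabs_pos|].
    left. apply Rdiv_lt_0_compat; lra. }
  assert (B4 : Rabs (RInt (kx x) m x) < eps / 8).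
  { eapply Rle_lt_trans.
    - apply (abs_RInt_le_near _ (kx x x) _ _ 1); [lra | intros; now apply continuity_pt_2d_r|].
      intros t Ht. apply Hd3; simpl; [rewrite Rminus_eq_0, Rabs_R0; apply cond_pos|].
      apply Rabs_def1; lra.
    - replace (eps / 8) with (eps / (8 * M) * M) by (field; lra).
      fold M. apply Rmult_lt_compat_r; lra. }
  replace ((RInt (k b) 0 b - RInt (k x) 0 x) / h - (k x x + RInt (kx x) 0 x))
    with ((RInt (k b) 0 b - RInt (k x) 0 x - (b - x) * (k x x + RInt (kx x) 0 x)) / h)
    by (unfold b; field; auto).
  rewrite (RInt_increment_split (k b) (k x) (kx x) (k x x) x b m)
    by (auto; intros; now apply continuity_pt_2d_r).
  replace (b - x) with h by (unfold b; ring).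
  unfold Rdiv. rewrite Rabs_mult, Rabs_inv.
  apply (Rmult_lt_reg_r (Rabs h)); auto.
  rewrite Rmult_assoc, Rinv_l, Rmult_1_r by lra.
  replace (b - x) with h in B3 by (unfold b; ring).
  now apply Rabs_four_terms_lt.
Qed.

Lemma is_derive_mult_R (f g : R -> R) x df dg : is_derive f x df -> is_derive g x dg ->
  is_derive (fun u => f u * g u) x (df * g x + f x * dg).
Proof. intros Hf Hg. exact (is_derive_mult f g x df dg Hf Hg Rmult_comm). Qed.

Lemma is_derive_max0 (f : R -> R) t l : 0 < t -> is_derive f t l ->
  is_derive (fun u => f (Rmax 0 u)) t l.
Proof.
  intros Ht H. apply (is_derive_ext_loc f); auto.
  generalize (locally_gt t 0 Ht). apply filter_imp. intros u Hu. now rewrite Rmax_right by lra.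
Qed.

(* [a^2 + b^2] is constant along a rotation. *)
Lemma rotation_zero (a b : R -> R) mu x : 0 < x ->
  (forall t, 0 < t -> is_derive a t (- mu * b t) /\ is_derive b t (mu * a t)) ->
  continuity_pt (fun t => a (Rmax 0 t)) 0 -> continuity_pt (fun t => b (Rmax 0 t)) 0 ->
  a 0 = 0 -> b 0 = 0 -> a x = 0 /\ b x = 0.
Proof.
  intros Hx Hd Ha Hb Ha0 Hb0.
  set (G t := a (Rmax 0 t) * a (Rmax 0 t) + b (Rmax 0 t) * b (Rmax 0 t)).
  assert (HdG : forall t, 0 < t -> is_derive G t 0).
  { intros t Ht. destruct (Hd t Ht) as [Hat Hbt].
    apply (is_derive_max0 (fun u => a u * a u + b u * b u)); auto.
    eapply is_derive_eq.
    - apply (is_derive_plus (fun u => a u * a u) (fun u => b u * b u));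
        apply is_derive_mult_R; eauto.
    - change (plus (- mu * b t * a t + a t * (- mu * b t)) (mu * a t * b t + b t * (mu * a t)) = 0).
      unfold plus; simpl; ring. }
  assert (HG : G 0 = G x).
  { apply eq_of_is_derive_0; auto.
    - intros t Ht. apply HdG. lra.
    - unfold G. apply continuity_pt_plus; now apply continuity_pt_mult.
    - apply (continuity_pt_of_is_derive _ _ 0). auto. }
  unfold G in HG. rewrite Rmax_left in HG by lra. rewrite Rmax_right in HG by lra.
  rewrite Ha0, Hb0 in HG. split; nra.
Qed.

Lemma continuity_pt_RInt_diag_0 (k : R -> R -> R) : (forall u v, continuity_2d_pt k u v) ->
  continuity_pt (fun u => RInt (k (Rmax 0 u)) 0 (Rmax 0 u)) 0.
Proof.
  intros Hk. destruct (Hk 0 0 (mkposreal 1 Rlt_0_1)) as [d0 Hd0].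
  set (M := Rabs (k 0 0) + 1).
  assert (HM : 0 < M) by (unfold M; generalize (Rabs_pos (k 0 0)); lra).
  apply continuity_pt_filterlim, filterlim_locally. intros eps.
  assert (Hd : 0 < Rmin d0 (eps / M))
    by (apply Rmin_pos; [apply cond_pos | apply Rdiv_lt_0_compat; [apply cond_pos | auto]]).
  exists (mkposreal _ Hd). intros t Ht. change (Rabs (t - 0) < Rmin d0 (eps / M)) in Ht.
  rewrite Rminus_0_r in Ht.
  change (Rabs (RInt (k (Rmax 0 t)) 0 (Rmax 0 t) - RInt (k (Rmax 0 0)) 0 (Rmax 0 0)) < eps).
  rewrite (Rmax_left 0 0), RInt_point, Rminus_0_r by lra.
  set (w := Rmax 0 t).
  assert (Hw0 : 0 <= w) by apply Rmax_l.
  assert (Hwt : w <= Rabs t)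
    by (unfold w, Rmax; destruct Rle_dec; [apply Rle_abs | apply Rabs_pos]).
  assert (Hw1 : w < d0)
    by (eapply Rle_lt_trans; [exact Hwt|]; eapply Rlt_le_trans; [exact Ht | apply Rmin_l]).
  assert (Hw2 : w < eps / M)
    by (eapply Rle_lt_trans; [exact Hwt|]; eapply Rlt_le_trans; [exact Ht | apply Rmin_r]).
  eapply Rle_lt_trans.
  - apply abs_RInt_le_const with (M := M);
      [auto | apply ex_RInt_of_continuity; intros; now apply continuity_pt_2d_r |].
    intros s Hs. assert (Hq : Rabs (k w s - k 0 0) < 1).
    { apply (Hd0 w s); rewrite Rminus_0_r, Rabs_right; lra. }
    unfold M. generalize (Rabs_triang_inv (k w s) (k 0 0)). lra.
  - rewrite Rminus_0_r. apply (Rmult_lt_reg_r (/ M)); [now apply Rinv_0_lt_compat|].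
    rewrite Rmult_assoc, Rinv_r, Rmult_1_r by lra. exact Hw2.
Qed.

(** * Complex-valued functions of a real variable *)

Lemma C_ext (a b : C) : fst a = fst b -> snd a = snd b -> a = b.
Proof. destruct a, b; simpl; intros -> ->; reflexivity. Qed.

Lemma ball_C (z : C) e (w : C) :
  ball z e w <-> Rabs (fst w - fst z) < e /\ Rabs (snd w - snd z) < e.
Proof. reflexivity. Qed.

Definition is_cderive (f : R -> C) x (l : C) :=
  is_derive (fun t => fst (f t)) x (fst l) /\ is_derive (fun t => snd (f t)) x (snd l).

Definition ccontinuous_pt (f : R -> C) t :=
  continuity_pt (fun s => fst (f s)) t /\ continuity_pt (fun s => snd (f s)) t.

Definition ccontinuity_2d_pt (f : R -> R -> C) u v :=
  continuity_2d_pt (fun a b => fst (f a b)) u v /\ continuity_2d_pt (fun a b => snd (f a b)) u v.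

Lemma is_cderive_of_cderiv f x D : cderiv f x D -> is_cderive f x D.
Proof.
  intros H. unfold cderiv in H.
  split; apply is_derive_Reals; intros eps Heps;
    destruct (proj1 (filterlim_locally _ _) H (mkposreal eps Heps)) as [d Hd];
    exists d; intros h Hh0 Hh;
    assert (Hb : ball x d (x + h)) by (rewrite ball_R; now replace (x + h - x) with h by ring);
    assert (Hne : x + h <> x) by lra;
    destruct (Hd (x + h) Hb Hne) as [Hd1 Hd2]; simpl in Hd1, Hd2;
    replace (x + h - x) with h in Hd1, Hd2 by ring.
  - replace ((fst (f (x + h)) - fst (f x)) / h)
      with (/ h * (fst (f (x + h)) + - fst (f x)) - 0 * (snd (f (x + h)) + - snd (f x)))
      by (field; auto).
    exact Hd1.
  - replace ((snd (f (x + h)) - snd (f x)) / h)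
      with (/ h * (snd (f (x + h)) + - snd (f x)) + 0 * (fst (f (x + h)) + - fst (f x)))
      by (field; auto).
    exact Hd2.
Qed.

Lemma cderiv_of_is_cderive f x D : is_cderive f x D -> cderiv f x D.
Proof.
  intros [H1 H2]. apply is_derive_Reals in H1. apply is_derive_Reals in H2.
  apply filterlim_locally. intros [eps Heps].
  destruct (H1 eps Heps) as [d1 Hd1]. destruct (H2 eps Heps) as [d2 Hd2].
  exists (mkposreal _ (Rmin_pos _ _ (cond_pos d1) (cond_pos d2))).
  intros y Hy Hne. change R in y. rewrite ball_R in Hy. simpl in Hy.
  assert (Hh0 : y - x <> 0) by lra.
  specialize (Hd1 (y - x) Hh0 (Rlt_le_trans _ _ _ Hy (Rmin_l _ _))).
  specialize (Hd2 (y - x) Hh0 (Rlt_le_trans _ _ _ Hy (Rmin_r _ _))).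
  replace (x + (y - x)) with y in Hd1, Hd2 by ring.
  rewrite ball_C. simpl. split.
  - replace (/ (y - x) * (fst (f y) + - fst (f x)) - 0 * (snd (f y) + - snd (f x)))
      with ((fst (f y) - fst (f x)) / (y - x)) by (field_R; auto).
    exact Hd1.
  - replace (/ (y - x) * (snd (f y) + - snd (f x)) + 0 * (fst (f y) + - fst (f x)))
      with ((snd (f y) - snd (f x)) / (y - x)) by (field_R; auto).
    exact Hd2.
Qed.

Lemma cderiv0_of_cderiv f x D : cderiv f x D -> cderiv0 f x D.
Proof.
  intros H. eapply filterlim_filter_le_1; [|exact H].
  intros P [d Hd]. exists d. intros y Hy [_ Hne]. now apply Hd.
Qed.

Lemma cderiv_of_cderiv0 f x D : 0 < x -> cderiv0 f x D -> cderiv f x D.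
Proof.
  intros Hx H. eapply filterlim_filter_le_1; [|exact H].
  intros P [d Hd].
  exists (mkposreal _ (Rmin_pos _ _ (cond_pos d) Hx)). intros y Hy Hne.
  rewrite ball_R in Hy. simpl in Hy. apply Hd.
  - rewrite ball_R. eapply Rlt_le_trans; [exact Hy | apply Rmin_l].
  - split; auto.
    destruct (Rabs_def2 _ _ (Rlt_le_trans _ _ _ Hy (Rmin_r _ _))). lra.
Qed.

Lemma cderiv0_continuous f x D :
  cderiv0 f x D -> filterlim f (within (fun y => 0 <= y) (locally x)) (locally (f x)).
Proof.
  intros H. apply filterlim_locally. intros eps.
  destruct (proj1 (filterlim_locally _ _) H (mkposreal 1 Rlt_0_1)) as [d1 Hd1].
  set (M := Rabs (fst D) + Rabs (snd D) + 1).
  assert (HM : 0 < M) by (unfold M; generalize (Rabs_pos (fst D)) (Rabs_pos (snd D)); lra).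
  assert (Hd : 0 < Rmin d1 (eps / M))
    by (apply Rmin_pos; [apply cond_pos | apply Rdiv_lt_0_compat; [apply cond_pos | auto]]).
  exists (mkposreal _ Hd). intros y Hy Hy0. change R in y. rewrite ball_R in Hy. simpl in Hy.
  destruct (Req_dec y x) as [->|Hne]; [apply ball_center|].
  destruct (Hd1 y) as [Q1 Q2];
    [rewrite ball_R; eapply Rlt_le_trans; [exact Hy | apply Rmin_l] | now split |].
  simpl in Q1, Q2.
  assert (Hyx : Rabs (y - x) < eps / M) by (eapply Rlt_le_trans; [exact Hy | apply Rmin_r]).
  assert (Hyx0 : y - x <> 0) by lra.
  assert (Gen : forall a b c, Rabs (/ (y - x) * (a + - b) - c) < 1 ->
            Rabs c <= Rabs (fst D) + Rabs (snd D) -> Rabs (a - b) < eps).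
  { intros a b c Hq Hc.
    assert (Hr : Rabs (/ (y - x) * (a + - b)) < M).
    { generalize (Rabs_triang_inv (/ (y - x) * (a + - b)) c). unfold M. lra. }
    replace (a - b) with ((y - x) * (/ (y - x) * (a + - b))) by (field; auto).
    rewrite Rabs_mult. replace (pos eps) with (eps / M * M) by (field; lra).
    apply Rmult_le_0_lt_compat; auto; apply Rabs_pos. }
  apply ball_C. split.
  - apply (Gen _ _ (fst D)); [|generalize (Rabs_pos (snd D)); lra].
    now replace (/ (y - x) * (fst (f y) + - fst (f x)) - fst D)
      with (/ (y - x) * (fst (f y) + - fst (f x)) - 0 * (snd (f y) + - snd (f x)) + - fst D)
      by ring.
  - apply (Gen _ _ (snd D)); [|generalize (Rabs_pos (fst D)); lra].
    now replace (/ (y - x) * (snd (f y) + - snd (f x)) - snd D)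
      with (/ (y - x) * (snd (f y) + - snd (f x)) + 0 * (fst (f y) + - fst (f x)) + - snd D)
      by ring.
Qed.

Lemma is_cderive_eq f x l l' : is_cderive f x l -> l = l' -> is_cderive f x l'.
Proof. now intros H <-. Qed.

Lemma is_cderive_ext_loc f g x l :
  locally x (fun t => f t = g t) -> is_cderive f x l -> is_cderive g x l.
Proof.
  intros Hl [H1 H2].
  split; (eapply is_derive_ext_loc; [|eassumption]);
    (eapply filter_imp; [|exact Hl]); now intros t ->.
Qed.

Lemma is_cderive_const (c : C) x : is_cderive (fun _ => c) x 0%C.
Proof. split; simpl; apply (is_derive_const (K := R_AbsRing) (V := R_NormedModule)). Qed.

Lemma is_cderive_plus f g x a b : is_cderive f x a -> is_cderive g x b ->
  is_cderive (fun t => f t + g t)%C x (a + b)%C.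
Proof. intros [H1 H2] [G1 G2]. split; simpl; now apply is_derive_plus_R. Qed.

Lemma is_cderive_opp f x a : is_cderive f x a -> is_cderive (fun t => - f t)%C x (- a)%C.
Proof.
  intros [H1 H2]. split; simpl.
  - now apply (is_derive_opp (fun t => fst (f t))).
  - now apply (is_derive_opp (fun t => snd (f t))).
Qed.

Lemma is_cderive_mult f g x a b : is_cderive f x a -> is_cderive g x b ->
  is_cderive (fun t => f t * g t)%C x (a * g x + f x * b)%C.
Proof.
  intros [H1 H2] [G1 G2]. split; simpl.
  - eapply is_derive_eq; [apply is_derive_minus_R; apply is_derive_mult_R; eauto | ring_R].
  - eapply is_derive_eq; [apply is_derive_plus_R; apply is_derive_mult_R; eauto | ring_R].
Qed.

Lemma is_cderive_conj f x d : is_cderive f x d -> is_cderive (fun t => Cconj (f t)) x (Cconj d).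
Proof. intros [H1 H2]. split; simpl; auto. now apply (is_derive_opp (fun t => snd (f t))). Qed.

Lemma is_cderive_cexp z x dz :
  is_cderive z x dz -> is_cderive (fun t => cexp (z t)) x (cexp (z x) * dz)%C.
Proof.
  intros [H1 H2]. unfold cexp, Re, Im.
  assert (He := is_derive_comp_R exp (fun t => fst (z t)) x _ _ H1 (is_derive_exp _)).
  split; simpl.
  - eapply is_derive_eq; [apply is_derive_mult_R; [exact He|]|].
    + exact (is_derive_comp_R cos (fun t => snd (z t)) x _ _ H2 (is_derive_cos _)).
    + ring_R.
  - eapply is_derive_eq; [apply is_derive_mult_R; [exact He|]|].
    + exact (is_derive_comp_R sin (fun t => snd (z t)) x _ _ H2 (is_derive_sin _)).
    + ring_R.
Qed.

Lemma ccontinuous_pt_const c t : ccontinuous_pt (fun _ => c) t.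
Proof. split; apply continuity_pt_cst. Qed.

Lemma ccontinuous_pt_plus f g t :
  ccontinuous_pt f t -> ccontinuous_pt g t -> ccontinuous_pt (fun s => f s + g s)%C t.
Proof. intros [F1 F2] [G1 G2]; split; simpl; now apply continuity_pt_plus. Qed.

Lemma ccontinuous_pt_opp f t : ccontinuous_pt f t -> ccontinuous_pt (fun s => - f s)%C t.
Proof.
  intros [F1 F2]; split; simpl.
  - now apply (continuity_pt_opp (fun s => fst (f s))).
  - now apply (continuity_pt_opp (fun s => snd (f s))).
Qed.

Lemma ccontinuous_pt_minus f g t :
  ccontinuous_pt f t -> ccontinuous_pt g t -> ccontinuous_pt (fun s => f s - g s)%C t.
Proof. intros; now apply ccontinuous_pt_plus, ccontinuous_pt_opp. Qed.

Lemma ccontinuous_pt_mult f g t :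
  ccontinuous_pt f t -> ccontinuous_pt g t -> ccontinuous_pt (fun s => f s * g s)%C t.
Proof.
  intros [F1 F2] [G1 G2]; split; simpl.
  - apply continuity_pt_minus; now apply continuity_pt_mult.
  - apply continuity_pt_plus; now apply continuity_pt_mult.
Qed.

Lemma ccontinuous_pt_conj f t : ccontinuous_pt f t -> ccontinuous_pt (fun s => Cconj (f s)) t.
Proof. intros [F1 F2]; split; simpl; auto. now apply (continuity_pt_opp (fun s => snd (f s))). Qed.

Lemma ccontinuous_pt_of_is_cderive f t l : is_cderive f t l -> ccontinuous_pt f t.
Proof. intros [H1 H2]; split; eapply continuity_pt_of_is_derive; eauto. Qed.

Lemma ccontinuous_pt_comp (f : R -> C) g t :
  continuity_pt g t -> ccontinuous_pt f (g t) -> ccontinuous_pt (fun s => f (g s)) t.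
Proof. intros Hg [F1 F2]. split; now apply (continuity_pt_comp g (fun s => _ (f s))). Qed.

Lemma ccontinuity_2d_pt_plus f g u v : ccontinuity_2d_pt f u v -> ccontinuity_2d_pt g u v ->
  ccontinuity_2d_pt (fun a b => f a b + g a b)%C u v.
Proof. intros [F1 F2] [G1 G2]; split; simpl; now apply continuity_2d_pt_plus. Qed.

Lemma ccontinuity_2d_pt_mult f g u v : ccontinuity_2d_pt f u v -> ccontinuity_2d_pt g u v ->
  ccontinuity_2d_pt (fun a b => f a b * g a b)%C u v.
Proof.
  intros [F1 F2] [G1 G2]; split; simpl.
  - apply continuity_2d_pt_minus; now apply continuity_2d_pt_mult.
  - apply continuity_2d_pt_plus; now apply continuity_2d_pt_mult.
Qed.

Lemma ccontinuity_2d_pt_snd (f : R -> C) u v :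
  ccontinuous_pt f v -> ccontinuity_2d_pt (fun _ b => f b) u v.
Proof.
  intros [F1 F2]; split; intros eps;
    [ destruct (proj1 (continuity_pt_filterlim _ _) F1 _ (locally_ball _ eps)) as [d Hd]
    | destruct (proj1 (continuity_pt_filterlim _ _) F2 _ (locally_ball _ eps)) as [d Hd] ];
    exists d; intros a b _ Hb; now apply Hd.
Qed.

Lemma ccontinuous_pt_of_2d_r f u v : ccontinuity_2d_pt f u v -> ccontinuous_pt (f u) v.
Proof. intros [F1 F2]; split; now apply (continuity_pt_2d_r (fun a b => _ (f a b))). Qed.

(* [u + v] and [u - v] rotate with frequencies [rho] and [- rho]. *)
Lemma coupled_rotation_zero (u v : R -> C) rho x : 0 < x ->
  (forall t, 0 < t -> is_cderive u t ((0, rho) * v t)%C /\ is_cderive v t ((0, rho) * u t)%C) ->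
  ccontinuous_pt (fun t => u (Rmax 0 t)) 0 -> ccontinuous_pt (fun t => v (Rmax 0 t)) 0 ->
  u 0 = 0%C -> v 0 = 0%C -> u x = 0%C /\ v x = 0%C.
Proof.
  intros Hx Hd [U1 U2] [V1 V2] Hu0 Hv0.
  assert (Hrot : forall (c : R -> C) mu, (forall t, 0 < t -> is_cderive c t ((0, mu) * c t)%C) ->
            ccontinuous_pt (fun t => c (Rmax 0 t)) 0 -> c 0 = 0%C -> c x = 0%C).
  { intros c mu Hc [C1 C2] Hc0.
    destruct (rotation_zero (fun t => fst (c t)) (fun t => snd (c t)) mu x Hx) as [E1 E2];
      [ | exact C1 | exact C2 | now rewrite Hc0 | now rewrite Hc0 | now apply C_ext ].
    intros t Ht. destruct (Hc t Ht) as [D1 D2].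
    split; (eapply is_derive_eq; [eassumption | simpl; ring_R]). }
  assert (Hp : (u x + v x)%C = 0%C).
  { apply (Hrot (fun t => u t + v t)%C rho).
    - intros t Ht. destruct (Hd t Ht) as [Du Dv].
      eapply is_cderive_eq; [exact (is_cderive_plus _ _ _ _ _ Du Dv) | ring].
    - split; simpl; now apply continuity_pt_plus.
    - rewrite Hu0, Hv0. apply C_ext; simpl; ring. }
  assert (Hm : (u x - v x)%C = 0%C).
  { apply (Hrot (fun t => u t - v t)%C (- rho)).
    - intros t Ht. destruct (Hd t Ht) as [Du Dv].
      eapply is_cderive_eq; [exact (is_cderive_plus _ _ _ _ _ Du (is_cderive_opp _ _ _ Dv))|].
      apply C_ext; simpl; ring.
    - split; simpl; apply continuity_pt_plus; auto;
        now apply (continuity_pt_opp (fun t => _ (v _))).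
    - rewrite Hu0, Hv0. apply C_ext; simpl; ring. }
  split.
  - replace (u x) with (/ 2 * ((u x + v x) + (u x - v x)))%C by (apply C_ext; simpl; field).
    rewrite Hp, Hm. apply C_ext; simpl; ring.
  - replace (v x) with (/ 2 * ((u x + v x) - (u x - v x)))%C by (apply C_ext; simpl; field).
    rewrite Hp, Hm. apply C_ext; simpl; ring.
Qed.

Lemma cint_RInt f a b : (forall t, ccontinuous_pt f t) ->
  cint f a b = (RInt (fun t => fst (f t)) a b, RInt (fun t => snd (f t)) a b).
Proof.
  intros H. apply (@is_RInt_unique C_R_CompleteNormedModule).
  apply (@is_RInt_fct_extend_pair R_NormedModule R_NormedModule f);
    apply (@RInt_correct R_CompleteNormedModule), ex_RInt_of_continuity; intros t; apply H.
Qed.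

Lemma cint_ext f g a b :
  (forall t, Rmin a b < t < Rmax a b -> f t = g t) -> cint f a b = cint g a b.
Proof. intros H. now apply (@RInt_ext C_R_CompleteNormedModule). Qed.

Lemma cint_point f a : cint f a a = 0%C.
Proof. unfold cint. now rewrite RInt_point. Qed.

Section CintContinuous.
Variables f g : R -> C.
Hypothesis Hf : forall t, ccontinuous_pt f t.
Hypothesis Hg : forall t, ccontinuous_pt g t.

Lemma cint_plus a b : cint (fun t => f t + g t)%C a b = (cint f a b + cint g a b)%C.
Proof.
  rewrite !cint_RInt; auto using ccontinuous_pt_plus.
  apply C_ext; simpl; apply RInt_plus_cont; intros t; apply Hf || apply Hg.
Qed.

Lemma cint_scal c a b : cint (fun t => c * f t)%C a b = (c * cint f a b)%C.
Proof.
  rewrite !cint_RInt by auto using ccontinuous_pt_mult, ccontinuous_pt_const.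
  apply C_ext; simpl; [rewrite RInt_minus_cont | rewrite RInt_plus_cont];
    rewrite ?RInt_scal_cont; auto; intros t; try apply continuity_pt_scal; apply Hf.
Qed.

Lemma cint_opp a b : cint (fun t => - f t)%C a b = (- cint f a b)%C.
Proof.
  replace (- cint f a b)%C with ((-1) * cint f a b)%C by (apply C_ext; simpl; ring).
  rewrite <- cint_scal. apply cint_ext. intros; apply C_ext; simpl; ring.
Qed.

Lemma cint_conj a b : cint (fun t => Cconj (f t)) a b = Cconj (cint f a b).
Proof.
  rewrite !cint_RInt by auto using ccontinuous_pt_conj.
  apply C_ext; simpl; auto.
  rewrite (RInt_ext _ (fun t => (-1) * snd (f t))) by (intros; ring_R).
  rewrite RInt_scal_cont; [ring_R | intros t; apply Hf].
Qed.

Lemma is_cderive_cint a u : is_cderive (fun v => cint f a v) u (f u).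
Proof.
  split; (eapply is_derive_ext; [intros v; symmetry; rewrite cint_RInt; [reflexivity | auto]|]);
    apply is_derive_RInt_cont; intros t; apply Hf.
Qed.

End CintContinuous.

Lemma cint_derive h dh a b : a < b ->
  (forall t, a < t < b -> is_cderive h t (dh t)) -> (forall t, ccontinuous_pt dh t) ->
  ccontinuous_pt h a -> ccontinuous_pt h b -> cint dh a b = (h b - h a)%C.
Proof.
  intros Hab Hd Hc Ha Hb. rewrite cint_RInt by auto.
  apply C_ext; simpl; apply (@is_RInt_unique R_CompleteNormedModule);
    apply (is_RInt_derive_open (fun t => _ (h t))); auto;
    solve [intros t Ht; apply Hd; auto | intros t; apply Hc | apply Ha | apply Hb].
Qed.

Lemma is_cderive_cint_diag (g gx : R -> R -> C) x : 0 < x ->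
  (forall u v, ccontinuity_2d_pt g u v) -> (forall u v, ccontinuity_2d_pt gx u v) ->
  (forall u y, 0 < y < u -> is_cderive (fun t => g t y) u (gx u y)) ->
  is_cderive (fun u => cint (g u) 0 u) x (g x x + cint (gx x) 0 x)%C.
Proof.
  intros Hx Hg Hgx Hd.
  assert (Hg1 : forall u t, ccontinuous_pt (g u) t) by (intros; now apply ccontinuous_pt_of_2d_r).
  assert (Hgx1 : forall u t, ccontinuous_pt (gx u) t) by (intros; now apply ccontinuous_pt_of_2d_r).
  rewrite (cint_RInt (gx x)) by auto.
  split; (eapply is_derive_ext; [intros u; symmetry; rewrite cint_RInt; [reflexivity | auto]|]);
    apply (is_derive_RInt_diag (fun u y => _ (g u y)) (fun u y => _ (gx u y))); auto;
    solve [intros; apply Hg | intros; apply Hgx | intros u y Hy; apply Hd; auto].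
Qed.

Lemma ccontinuous_pt_cint_diag_0 (h : R -> R -> C) : (forall u v, ccontinuity_2d_pt h u v) ->
  ccontinuous_pt (fun u => cint (h (Rmax 0 u)) 0 (Rmax 0 u)) 0.
Proof.
  intros Hh.
  split; (eapply continuity_pt_ext;
            [intros u; symmetry; rewrite cint_RInt;
               [reflexivity | intros t; now apply ccontinuous_pt_of_2d_r]|]);
    apply (continuity_pt_RInt_diag_0 (fun a b => _ (h a b))); intros; apply Hh.
Qed.

(** * 2x2 matrices and matrix-valued functions *)

Lemma M2_ext (A B : M2) :
  m11 A = m11 B -> m12 A = m12 B -> m21 A = m21 B -> m22 A = m22 B -> A = B.
Proof. destruct A, B; simpl; intros -> -> -> ->; reflexivity. Qed.

Ltac meq := apply M2_ext; simpl; ring.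
Ltac split4 := split; [|split; [|split]].

Lemma mmul_assoc A B C : mmul (mmul A B) C = mmul A (mmul B C).
Proof. meq. Qed.

Lemma msub_eq0 A B : msub A B = mzero -> A = B.
Proof. intros E. transitivity (madd (msub A B) B); [meq | rewrite E; meq]. Qed.

Lemma Bm_mmul_solve D X Y : madd (mmul Bm D) X = Y -> D = mmul Bm (msub Y X).
Proof. intros <-. unfold Bm. meq. Qed.

Lemma In_m11 : In m11 entries. Proof. simpl; auto. Qed.
Lemma In_m12 : In m12 entries. Proof. simpl; auto. Qed.
Lemma In_m21 : In m21 entries. Proof. simpl; auto. Qed.
Lemma In_m22 : In m22 entries. Proof. simpl; auto. Qed.

Definition is_mderive (F : R -> M2) x (L : M2) :=
  is_cderive (fun t => m11 (F t)) x (m11 L) /\ is_cderive (fun t => m12 (F t)) x (m12 L) /\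
  is_cderive (fun t => m21 (F t)) x (m21 L) /\ is_cderive (fun t => m22 (F t)) x (m22 L).

Definition mcontinuous_pt (F : R -> M2) t :=
  ccontinuous_pt (fun s => m11 (F s)) t /\ ccontinuous_pt (fun s => m12 (F s)) t /\
  ccontinuous_pt (fun s => m21 (F s)) t /\ ccontinuous_pt (fun s => m22 (F s)) t.

Definition mcontinuous (F : R -> M2) := forall t, mcontinuous_pt F t.

Definition mcontinuity_2d_pt (F : R -> R -> M2) u v :=
  ccontinuity_2d_pt (fun a b => m11 (F a b)) u v /\
  ccontinuity_2d_pt (fun a b => m12 (F a b)) u v /\
  ccontinuity_2d_pt (fun a b => m21 (F a b)) u v /\
  ccontinuity_2d_pt (fun a b => m22 (F a b)) u v.

Lemma is_mderive_of_mderiv F x D : mderiv F x D -> is_mderive F x D.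
Proof.
  intros H. split4; apply is_cderive_of_cderiv;
    [apply (H _ In_m11) | apply (H _ In_m12) | apply (H _ In_m21) | apply (H _ In_m22)].
Qed.

Lemma is_mderive_of_mderiv0 F x D : 0 < x -> mderiv0 F x D -> is_mderive F x D.
Proof.
  intros Hx H. split4; apply is_cderive_of_cderiv, cderiv_of_cderiv0; auto;
    [apply (H _ In_m11) | apply (H _ In_m12) | apply (H _ In_m21) | apply (H _ In_m22)].
Qed.

Lemma mderiv0_of_is_mderive F x D : is_mderive F x D -> mderiv0 F x D.
Proof.
  intros (H1 & H2 & H3 & H4) e He. simpl in He.
  destruct He as [<-|[<-|[<-|[<-|[]]]]]; now apply cderiv0_of_cderiv, cderiv_of_is_cderive.
Qed.

Lemma is_mderive_eq F x L L' : is_mderive F x L -> L = L' -> is_mderive F x L'.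
Proof. now intros H <-. Qed.

Lemma is_mderive_ext_loc F G x L :
  locally x (fun t => F t = G t) -> is_mderive F x L -> is_mderive G x L.
Proof.
  intros Hl (H1 & H2 & H3 & H4).
  split4; (eapply is_cderive_ext_loc; [|eassumption]);
    (eapply filter_imp; [|exact Hl]); now intros t ->.
Qed.

Lemma is_mderive_const A x : is_mderive (fun _ => A) x mzero.
Proof. split4; apply is_cderive_const. Qed.

Lemma is_mderive_madd F G x DF DG : is_mderive F x DF -> is_mderive G x DG ->
  is_mderive (fun t => madd (F t) (G t)) x (madd DF DG).
Proof.
  intros (H1 & H2 & H3 & H4) (G1 & G2 & G3 & G4). split4; simpl; now apply is_cderive_plus.
Qed.

Lemma is_mderive_mopp F x DF : is_mderive F x DF -> is_mderive (fun t => mopp (F t)) x (mopp DF).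
Proof. intros (H1 & H2 & H3 & H4). split4; simpl; now apply is_cderive_opp. Qed.

Lemma is_mderive_mmul F G x DF DG : is_mderive F x DF -> is_mderive G x DG ->
  is_mderive (fun t => mmul (F t) (G t)) x (madd (mmul DF (G x)) (mmul (F x) DG)).
Proof.
  intros (H1 & H2 & H3 & H4) (G1 & G2 & G3 & G4).
  split4; simpl; (eapply is_cderive_eq;
    [apply is_cderive_plus; apply is_cderive_mult; eassumption | cbv beta; ring]).
Qed.

Lemma is_mderive_mscal (c : R -> C) F x dc DF : is_cderive c x dc -> is_mderive F x DF ->
  is_mderive (fun t => mscal (c t) (F t)) x (madd (mscal dc (F x)) (mscal (c x) DF)).
Proof. intros Hc (H1 & H2 & H3 & H4). split4; simpl; now apply is_cderive_mult. Qed.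

Lemma is_mderive_mkM2 a b c d x da db dc dd :
  is_cderive a x da -> is_cderive b x db -> is_cderive c x dc -> is_cderive d x dd ->
  is_mderive (fun t => mkM2 (a t) (b t) (c t) (d t)) x (mkM2 da db dc dd).
Proof. intros; now split4. Qed.

Lemma mcontinuous_pt_of_is_mderive F t L : is_mderive F t L -> mcontinuous_pt F t.
Proof. intros (H1 & H2 & H3 & H4); split4; eapply ccontinuous_pt_of_is_cderive; eauto. Qed.

Lemma mcontinuous_pt_const A t : mcontinuous_pt (fun _ => A) t.
Proof. split4; apply ccontinuous_pt_const. Qed.

Lemma mcontinuous_pt_madd F G t : mcontinuous_pt F t -> mcontinuous_pt G t ->
  mcontinuous_pt (fun s => madd (F s) (G s)) t.
Proof.
  intros (F1 & F2 & F3 & F4) (G1 & G2 & G3 & G4); split4; simpl; now apply ccontinuous_pt_plus.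
Qed.

Lemma mcontinuous_pt_mopp F t : mcontinuous_pt F t -> mcontinuous_pt (fun s => mopp (F s)) t.
Proof. intros (F1 & F2 & F3 & F4); split4; simpl; now apply ccontinuous_pt_opp. Qed.

Lemma mcontinuous_pt_mmul F G t : mcontinuous_pt F t -> mcontinuous_pt G t ->
  mcontinuous_pt (fun s => mmul (F s) (G s)) t.
Proof.
  intros (F1 & F2 & F3 & F4) (G1 & G2 & G3 & G4);
    split4; simpl; apply ccontinuous_pt_plus; now apply ccontinuous_pt_mult.
Qed.

Lemma mcontinuous_pt_mscal c F t : ccontinuous_pt c t -> mcontinuous_pt F t ->
  mcontinuous_pt (fun s => mscal (c s) (F s)) t.
Proof. intros Hc (F1 & F2 & F3 & F4); split4; simpl; now apply ccontinuous_pt_mult. Qed.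

Lemma mcontinuous_pt_comp (F : R -> M2) g t :
  continuity_pt g t -> mcontinuous_pt F (g t) -> mcontinuous_pt (fun s => F (g s)) t.
Proof.
  intros Hg (F1 & F2 & F3 & F4). split4; now apply (ccontinuous_pt_comp (fun s => _ (F s))).
Qed.

Lemma mcontinuous_pt_ext F G t :
  (forall s, F s = G s) -> mcontinuous_pt F t -> mcontinuous_pt G t.
Proof.
  intros E ([A1 A2] & [B1 B2] & [C1 C2] & [D1 D2]).
  split4; split; (eapply continuity_pt_ext; [intros s; rewrite <- E; reflexivity|]); eassumption.
Qed.

Lemma mcontinuity_2d_pt_mmul F G u v : mcontinuity_2d_pt F u v -> mcontinuity_2d_pt G u v ->
  mcontinuity_2d_pt (fun a b => mmul (F a b) (G a b)) u v.
Proof.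
  intros (F1 & F2 & F3 & F4) (G1 & G2 & G3 & G4);
    split4; simpl; apply ccontinuity_2d_pt_plus; now apply ccontinuity_2d_pt_mult.
Qed.

Lemma mcontinuity_2d_pt_snd (F : R -> M2) u v :
  mcontinuous_pt F v -> mcontinuity_2d_pt (fun _ b => F b) u v.
Proof. intros (F1 & F2 & F3 & F4); split4; now apply ccontinuity_2d_pt_snd. Qed.

Lemma mcontinuous_pt_of_2d_r F u v : mcontinuity_2d_pt F u v -> mcontinuous_pt (F u) v.
Proof.
  intros (F1 & F2 & F3 & F4);
    split4; now apply (ccontinuous_pt_of_2d_r (fun a b => _ (F a b))).
Qed.

(* Precomposing with [Rmax 0] (resp. with [(a, b) |-> (clamp_fst a b, Rmax 0 b)]) extends a
   function continuous on [0, oo) (resp. on the closure of Omega) to a continuous function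
   on R (resp. R^2), to which the pointwise continuity results above apply. *)
Definition clamp_fst (a b : R) := Rmax a (Rmax 0 b).

Lemma clamp_fst_eq u y : 0 <= y <= u -> clamp_fst u y = u.
Proof. intros H. unfold clamp_fst. rewrite (Rmax_right 0 y) by lra. apply Rmax_left. lra. Qed.

Lemma Rmax0_eq y : 0 <= y -> Rmax 0 y = y.
Proof. apply Rmax_right. Qed.

Lemma Omega_bar_clamp a b : Omega_bar (clamp_fst a b, Rmax 0 b).
Proof. split; [apply Rmax_l | apply Rmax_r]. Qed.

Lemma ccontinuous_pt_clamp0 (h : R -> C) x : 0 <= x ->
  filterlim h (within (fun y => 0 <= y) (locally x)) (locally (h x)) ->
  ccontinuous_pt (fun t => h (Rmax 0 t)) x.
Proof.
  intros Hx H.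
  assert (Key : forall eps : posreal, exists d : posreal, forall t, Rabs (t - x) < d ->
            Rabs (fst (h (Rmax 0 t)) - fst (h x)) < eps /\
            Rabs (snd (h (Rmax 0 t)) - snd (h x)) < eps).
  { intros eps. destruct (proj1 (filterlim_locally _ _) H eps) as [d Hd].
    exists d. intros t Ht. apply ball_C, Hd; [|apply Rmax_l].
    rewrite ball_R. eapply Rle_lt_trans; [|exact Ht].
    rewrite <- (Rmax0_eq x Hx) at 1. apply Rmax_lipschitz. }
  split; apply continuity_pt_filterlim, filterlim_locally; intros eps;
    destruct (Key eps) as [d Hd]; exists d; intros t Ht; rewrite ball_R in *;
    rewrite (Rmax0_eq x Hx); now apply Hd.
Qed.

Lemma mcontinuous_pt_clamp0 f x : 0 <= x -> mcont0 f x -> mcontinuous_pt (fun t => f (Rmax 0 t)) x.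
Proof.
  intros Hx H. split4; apply (ccontinuous_pt_clamp0 (fun t => _ (f t))); auto;
    [apply (H _ In_m11) | apply (H _ In_m12) | apply (H _ In_m21) | apply (H _ In_m22)].
Qed.

Lemma mcontinuous_clamp0 f :
  (forall x, 0 <= x -> mcont0 f x) -> mcontinuous (fun t => f (Rmax 0 t)).
Proof.
  intros H s. apply (mcontinuous_pt_ext (fun t => (fun u => f (Rmax 0 u)) (Rmax 0 t))).
  { intros t. now rewrite (Rmax0_eq (Rmax 0 t)) by apply Rmax_l. }
  apply (mcontinuous_pt_comp (fun u => f (Rmax 0 u)) (Rmax 0)); [apply continuity_pt_Rmax0|].
  apply mcontinuous_pt_clamp0, H; apply Rmax_l.
Qed.

Lemma ccontinuity_2d_pt_clamp (h : R -> R -> C) :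
  (forall x y, Omega_bar (x, y) -> filterlim (fun p : R * R => h (fst p) (snd p))
                                     (within Omega_bar (locally (x, y))) (locally (h x y))) ->
  forall u v, ccontinuity_2d_pt (fun a b => h (clamp_fst a b) (Rmax 0 b)) u v.
Proof.
  intros H u v.
  assert (Key : forall eps : posreal, exists d : posreal, forall a b,
            Rabs (a - u) < d -> Rabs (b - v) < d ->
            Rabs (fst (h (clamp_fst a b) (Rmax 0 b)) - fst (h (clamp_fst u v) (Rmax 0 v))) < eps /\
            Rabs (snd (h (clamp_fst a b) (Rmax 0 b)) - snd (h (clamp_fst u v) (Rmax 0 v))) < eps).
  { intros eps.
    destruct (proj1 (filterlim_locally _ _) (H _ _ (Omega_bar_clamp u v)) eps) as [d Hd].
    exists d. intros a b Ha Hb. apply ball_C, (Hd (clamp_fst a b, Rmax 0 b));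
      [|apply Omega_bar_clamp].
    split; simpl; rewrite ball_R.
    - eapply Rle_lt_trans; [apply Rmax_lipschitz2|]. apply Rmax_lub_lt; auto.
      eapply Rle_lt_trans; [apply Rmax_lipschitz | exact Hb].
    - eapply Rle_lt_trans; [apply Rmax_lipschitz | exact Hb]. }
  split; intros eps; destruct (Key eps) as [d Hd]; exists d; intros a b Ha Hb; now apply Hd.
Qed.

Lemma mcontinuity_2d_pt_clamp (K : R -> R -> M2) :
  (forall x y, Omega_bar (x, y) -> mcont_Obar K x y) ->
  forall u v, mcontinuity_2d_pt (fun a b => K (clamp_fst a b) (Rmax 0 b)) u v.
Proof.
  intros H u v. split4; apply (ccontinuity_2d_pt_clamp (fun a b => _ (K a b))); intros x y Hxy;
    [apply (H x y Hxy _ In_m11) | apply (H x y Hxy _ In_m12)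
    | apply (H x y Hxy _ In_m21) | apply (H x y Hxy _ In_m22)].
Qed.

Lemma mcont0_of_C1_nonneg P : C1_nonneg P -> forall x, 0 <= x -> mcont0 P x.
Proof. intros [dP [HdP _]] x Hx e He. eapply cderiv0_continuous, (HdP x Hx e He). Qed.

Lemma mcont0_Pzero x : mcont0 Pzero x.
Proof. intros e He. unfold Pzero. apply filterlim_const. Qed.

Lemma Bm_rotation_zero (d : R -> M2) rho :
  (forall t, 0 < t -> exists D, is_mderive d t D /\ D = mmul Bm (mscal (0, rho) (d t))) ->
  mcontinuous_pt (fun t => d (Rmax 0 t)) 0 -> d 0 = mzero -> forall x, 0 <= x -> d x = mzero.
Proof.
  intros Hd (C11 & C12 & C21 & C22) H0 x Hx.
  destruct (Req_dec x 0) as [->|Hx0]; auto.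
  destruct (coupled_rotation_zero (fun t => m11 (d t)) (fun t => m21 (d t)) rho x)
    as [E11 E21]; try lra; auto; try (rewrite H0; reflexivity).
  { intros t Ht. destruct (Hd t Ht) as (D & (D1 & D2 & D3 & D4) & ->).
    split; (eapply is_cderive_eq; [eassumption | simpl; ring]). }
  destruct (coupled_rotation_zero (fun t => m12 (d t)) (fun t => m22 (d t)) rho x)
    as [E12 E22]; try lra; auto; try (rewrite H0; reflexivity).
  { intros t Ht. destruct (Hd t Ht) as (D & (D1 & D2 & D3 & D4) & ->).
    split; (eapply is_cderive_eq; [eassumption | simpl; ring]). }
  now apply M2_ext.
Qed.

Lemma mcontinuous_m11 F : mcontinuous F -> forall t, ccontinuous_pt (fun s => m11 (F s)) t.
Proof. intros H t; apply H. Qed.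
Lemma mcontinuous_m12 F : mcontinuous F -> forall t, ccontinuous_pt (fun s => m12 (F s)) t.
Proof. intros H t; apply H. Qed.
Lemma mcontinuous_m21 F : mcontinuous F -> forall t, ccontinuous_pt (fun s => m21 (F s)) t.
Proof. intros H t; apply H. Qed.
Lemma mcontinuous_m22 F : mcontinuous F -> forall t, ccontinuous_pt (fun s => m22 (F s)) t.
Proof. intros H t; apply H. Qed.

Ltac ccontinuity :=
  repeat (first [ apply ccontinuous_pt_plus | apply ccontinuous_pt_mult | apply ccontinuous_pt_opp
                | apply ccontinuous_pt_conj | apply ccontinuous_pt_const
                | apply mcontinuous_m11 | apply mcontinuous_m12
                | apply mcontinuous_m21 | apply mcontinuous_m22 | intro ]); auto.

Lemma mint_ext F G a b :
  (forall t, Rmin a b < t < Rmax a b -> F t = G t) -> mint F a b = mint G a b.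
Proof. intros H. unfold mint. f_equal; apply cint_ext; intros t Ht; now rewrite H. Qed.

Lemma mint_point F a : mint F a a = mzero.
Proof. unfold mint. now rewrite !cint_point. Qed.

Section MintContinuous.
Variables F G : R -> M2.
Hypothesis HF : mcontinuous F.
Hypothesis HG : mcontinuous G.

Lemma mint_madd a b : mint (fun t => madd (F t) (G t)) a b = madd (mint F a b) (mint G a b).
Proof. apply M2_ext; simpl; apply cint_plus; ccontinuity. Qed.

Lemma mint_mopp a b : mint (fun t => mopp (F t)) a b = mopp (mint F a b).
Proof. apply M2_ext; simpl; apply cint_opp; ccontinuity. Qed.

Lemma mint_mscal c a b : mint (fun t => mscal c (F t)) a b = mscal c (mint F a b).
Proof. apply M2_ext; simpl; apply cint_scal; ccontinuity. Qed.

Lemma mint_mmul_l A a b : mint (fun t => mmul A (F t)) a b = mmul A (mint F a b).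
Proof.
  apply M2_ext; simpl; (rewrite cint_plus; [|ccontinuity|ccontinuity]);
    rewrite !cint_scal; ccontinuity.
Qed.

Lemma mint_mconj_mtr a b : mint (fun t => mconj (mtr (F t))) a b = mconj (mtr (mint F a b)).
Proof. apply M2_ext; simpl; apply cint_conj; ccontinuity. Qed.

End MintContinuous.

Lemma mint_derive H DH a b : a < b ->
  (forall t, a < t < b -> is_mderive H t (DH t)) -> mcontinuous DH ->
  mcontinuous_pt H a -> mcontinuous_pt H b -> mint DH a b = msub (H b) (H a).
Proof.
  intros Hab Hd Hc Ha Hb. apply M2_ext; simpl;
    [ rewrite (cint_derive (fun t => m11 (H t)))
    | rewrite (cint_derive (fun t => m12 (H t)))
    | rewrite (cint_derive (fun t => m21 (H t)))
    | rewrite (cint_derive (fun t => m22 (H t))) ];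
    solve [ ring | exact Hab | intros t Ht; apply Hd; auto | ccontinuity | apply Ha | apply Hb ].
Qed.

Lemma is_mderive_mint_diag (G Gx : R -> R -> M2) x : 0 < x ->
  (forall u v, mcontinuity_2d_pt G u v) -> (forall u v, mcontinuity_2d_pt Gx u v) ->
  (forall u y, 0 < y < u -> is_mderive (fun t => G t y) u (Gx u y)) ->
  is_mderive (fun u => mint (G u) 0 u) x (madd (G x x) (mint (Gx x) 0 x)).
Proof.
  intros Hx HG HGx Hd.
  split4; simpl; apply (is_cderive_cint_diag (fun a b => _ (G a b)) (fun a b => _ (Gx a b))); auto;
    solve [intros; apply HG | intros; apply HGx | intros u y Hy; apply Hd; auto].
Qed.

Lemma mcontinuous_pt_mint_diag_0 (G : R -> R -> M2) : (forall u v, mcontinuity_2d_pt G u v) ->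
  mcontinuous_pt (fun u => mint (G (Rmax 0 u)) 0 (Rmax 0 u)) 0.
Proof.
  intros HG. split4; simpl; apply (ccontinuous_pt_cint_diag_0 (fun a b => _ (G a b)));
    intros; apply HG.
Qed.

Definition Rmat_of (t1 t2 : C) : M2 :=
  mscal (cexp (Copp t1)) (mkM2 (ccosh t2) (Copp (csinh t2)) (Copp (csinh t2)) (ccosh t2)).

Lemma Rmat_eq P1 P2 x : Rmat P1 P2 x = Rmat_of (theta1 P1 P2 x) (theta2 P1 P2 x).
Proof. reflexivity. Qed.

Lemma Rmat_0 P1 P2 : Rmat P1 P2 0 = mkM2 1 0 0 1.
Proof.
  rewrite Rmat_eq. unfold theta1, theta2. rewrite !cint_point.
  unfold Rmat_of, ccosh, csinh, cexp, Re, Im. apply M2_ext; simpl; apply C_ext; simpl;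
    rewrite ?Rmult_0_r, ?Rmult_0_l, ?Rminus_0_r, ?Rplus_0_r, ?Ropp_0, ?exp_0, ?cos_0, ?sin_0; field.
Qed.

Lemma is_mderive_Rmat_of t1 t2 x d1 d2 : is_cderive t1 x d1 -> is_cderive t2 x d2 ->
  exists L, is_mderive (fun u => Rmat_of (t1 u) (t2 u)) x L.
Proof.
  intros H1 H2.
  assert (Hc : is_cderive (fun u => ccosh (t2 u)) x
                 (RtoC (/ 2) * (cexp (t2 x) * d2 + cexp (- t2 x) * - d2))%C).
  { eapply is_cderive_eq.
    - apply is_cderive_mult; [apply is_cderive_const|].
      apply is_cderive_plus; apply is_cderive_cexp; [exact H2 | exact (is_cderive_opp _ _ _ H2)].
    - cbv beta; ring. }
  assert (Hs : is_cderive (fun u => Copp (csinh (t2 u))) x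
                 (- (RtoC (/ 2) * (cexp (t2 x) * d2 - cexp (- t2 x) * - d2)))%C).
  { apply is_cderive_opp. eapply is_cderive_eq.
    - apply is_cderive_mult; [apply is_cderive_const|].
      apply is_cderive_plus; [|apply is_cderive_opp]; apply is_cderive_cexp;
        [exact H2 | exact (is_cderive_opp _ _ _ H2)].
    - cbv beta; ring. }
  eexists. apply is_mderive_mscal.
  - exact (is_cderive_cexp _ _ _ (is_cderive_opp _ _ _ H1)).
  - exact (is_mderive_mkM2 (fun u => ccosh (t2 u)) (fun u => Copp (csinh (t2 u)))
             (fun u => Copp (csinh (t2 u))) (fun u => ccosh (t2 u)) x _ _ _ _ Hc Hs Hs Hc).
Qed.

Section RmatRegularity.
Variables P1 P2 : R -> M2.
Hypothesis HP1 : forall x, 0 <= x -> mcont0 P1 x.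
Hypothesis HP2 : forall x, 0 <= x -> mcont0 P2 x.

Let q1 s := (m12 (P2 (Rmax 0 s)) + m21 (P2 (Rmax 0 s))
             - m12 (P1 (Rmax 0 s)) - m21 (P1 (Rmax 0 s)))%C.
Let q2 s := (m11 (P2 (Rmax 0 s)) + m22 (P2 (Rmax 0 s))
             - m11 (P1 (Rmax 0 s)) - m22 (P1 (Rmax 0 s)))%C.

Lemma theta_integrands_continuous t : ccontinuous_pt q1 t /\ ccontinuous_pt q2 t.
Proof.
  destruct (mcontinuous_clamp0 P1 HP1 t) as (A1 & A2 & A3 & A4).
  destruct (mcontinuous_clamp0 P2 HP2 t) as (B1 & B2 & B3 & B4).
  split; repeat apply ccontinuous_pt_minus; auto; now apply ccontinuous_pt_plus.
Qed.

Let Rc u := Rmat_of (RtoC (/ 2) * cint q1 0 u)%C (RtoC (/ 2) * cint q2 0 u)%C.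

Lemma Rmat_clamped u : 0 <= u -> Rmat P1 P2 u = Rc u.
Proof.
  intros Hu. rewrite Rmat_eq. unfold Rc, theta1, theta2.
  f_equal; f_equal; apply cint_ext; intros t Ht;
    rewrite Rmin_left, Rmax_right in Ht by lra; unfold q1, q2; now rewrite Rmax0_eq by lra.
Qed.

Lemma is_mderive_Rc u : exists L, is_mderive Rc u L.
Proof.
  apply (is_mderive_Rmat_of _ _ u (RtoC (/ 2) * q1 u)%C (RtoC (/ 2) * q2 u)%C);
    (eapply is_cderive_eq;
       [apply is_cderive_mult; [apply is_cderive_const | apply is_cderive_cint]|]);
    solve [intros t; apply theta_integrands_continuous | cbv beta; ring].
Qed.

Lemma is_mderive_Rmat x : 0 < x -> exists dR, is_mderive (Rmat P1 P2) x dR.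
Proof.
  intros Hx. destruct (is_mderive_Rc x) as [L HL]. exists L.
  eapply is_mderive_ext_loc; [|exact HL]. eapply filter_imp; [|apply (locally_gt x 0 Hx)].
  intros t Ht. symmetry. apply Rmat_clamped. lra.
Qed.

Lemma mcontinuous_pt_Rmat_clamp0 : mcontinuous_pt (fun u => Rmat P1 P2 (Rmax 0 u)) 0.
Proof.
  apply (mcontinuous_pt_ext (fun u => Rc (Rmax 0 u))).
  { intros u. symmetry. apply Rmat_clamped, Rmax_l. }
  apply (mcontinuous_pt_comp Rc (Rmax 0)); [apply continuity_pt_Rmax0|].
  destruct (is_mderive_Rc (Rmax 0 0)) as [L HL]. eapply mcontinuous_pt_of_is_mderive; eauto.
Qed.

End RmatRegularity.

(** * The transformation identity *)

Section Transformation.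
Variables (P : R -> M2) (Q : M2) (rho : R) (phi : R -> M2) (K Kx Ky : R -> R -> M2).
Hypothesis HP : forall x, 0 <= x -> mcont0 P x.
Hypothesis Hphi0 : phi 0 = Q.
Hypothesis Hphi_cont : forall x, 0 <= x -> mcont0 phi x.
Hypothesis Hphi_eq : forall x, 0 < x -> exists D, mderiv0 phi x D /\
  madd (mmul Bm D) (mmul (P x) (phi x)) = mscal (0, rho) (phi x).
Hypothesis HK_cont : forall x y, Omega_bar (x, y) ->
  mcont_Obar K x y /\ mcont_Obar Kx x y /\ mcont_Obar Ky x y.
Hypothesis HK_der : forall x y, Omega (x, y) ->
  mderiv (fun t => K t y) x (Kx x y) /\ mderiv (fun s => K x s) y (Ky x y).
Hypothesis HK_pde : forall x y, Omega (x, y) ->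
  madd (madd (mmul Bm (Kx x y)) (mmul (Ky x y) Bm))
       (msub (mmul (Pzero x) (K x y)) (mmul (K x y) (P y))) = mzero.
Hypothesis HK_bc : forall x, 0 <= x -> mmul (mmul (K x 0) Bm) Q = mzero.
Hypothesis HK_diag : forall x, 0 <= x -> forall dR, mderiv0 (Rmat P Pzero) x dR ->
  msub (mmul (K x x) Bm) (mmul Bm (K x x)) =
  msub (madd (mmul Bm dR) (mmul (Pzero x) (Rmat P Pzero x))) (mmul (Rmat P Pzero x) (P x)).

Let phic t := phi (Rmax 0 t).
Let Pc t := P (Rmax 0 t).
Let Kc a b := K (clamp_fst a b) (Rmax 0 b).
Let Kxc a b := Kx (clamp_fst a b) (Rmax 0 b).
Let Kyc a b := Ky (clamp_fst a b) (Rmax 0 b).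
Let Kphi x y := mmul (Kc x y) (phic y).
Let Kxphi x y := mmul (Kxc x y) (phic y).
Let I x := mint (fun y => mmul (K x y) (phi y)) 0 x.

Lemma phic_continuous : mcontinuous phic.
Proof. now apply mcontinuous_clamp0. Qed.

Lemma Pc_continuous : mcontinuous Pc.
Proof. now apply mcontinuous_clamp0. Qed.

Lemma Kc_continuity_2d u v : mcontinuity_2d_pt Kc u v.
Proof. apply mcontinuity_2d_pt_clamp. intros x y Hxy. apply (HK_cont x y Hxy). Qed.

Lemma Kxc_continuity_2d u v : mcontinuity_2d_pt Kxc u v.
Proof. apply (mcontinuity_2d_pt_clamp Kx). intros x y Hxy. apply (HK_cont x y Hxy). Qed.

Lemma Kyc_continuity_2d u v : mcontinuity_2d_pt Kyc u v.
Proof. apply (mcontinuity_2d_pt_clamp Ky). intros x y Hxy. apply (HK_cont x y Hxy). Qed.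

Lemma Kphi_continuity_2d u v : mcontinuity_2d_pt Kphi u v.
Proof.
  apply mcontinuity_2d_pt_mmul;
    [apply Kc_continuity_2d | apply mcontinuity_2d_pt_snd, phic_continuous].
Qed.

Lemma Kxphi_continuity_2d u v : mcontinuity_2d_pt Kxphi u v.
Proof.
  apply mcontinuity_2d_pt_mmul;
    [apply Kxc_continuity_2d | apply mcontinuity_2d_pt_snd, phic_continuous].
Qed.

Lemma I_clamped x : 0 <= x -> I x = mint (Kphi x) 0 x.
Proof.
  intros Hx. unfold I. apply mint_ext. intros y Hy. rewrite Rmin_left, Rmax_right in Hy by lra.
  unfold Kphi, Kc, phic. now rewrite clamp_fst_eq, Rmax0_eq by lra.
Qed.

Lemma is_mderive_I x : 0 < x -> is_mderive I x (madd (Kphi x x) (mint (Kxphi x) 0 x)).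
Proof.
  intros Hx.
  apply is_mderive_ext_loc with (F := fun u => mint (Kphi u) 0 u).
  { eapply filter_imp; [|apply (locally_gt x 0 Hx)].
    intros t Ht. symmetry. apply I_clamped. lra. }
  apply is_mderive_mint_diag; [exact Hx | apply Kphi_continuity_2d | apply Kxphi_continuity_2d |].
  intros u y Hy.
  assert (Hom : Omega (u, y)) by (unfold Omega; simpl; lra).
  apply is_mderive_ext_loc with (F := fun t => mmul (K t y) (phi y)).
  { eapply filter_imp; [|apply (locally_gt u y (proj2 Hy))]. intros t Ht.
    unfold Kphi, Kc, phic. now rewrite clamp_fst_eq, Rmax0_eq by lra. }
  eapply is_mderive_eq.
  - apply is_mderive_mmul;
      [apply is_mderive_of_mderiv, (proj1 (HK_der u y Hom)) | apply is_mderive_const].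
  - unfold Kxphi, Kxc, phic. rewrite clamp_fst_eq, Rmax0_eq by lra. meq.
Qed.

Let KBphi x y := mmul (mmul (Kc x y) Bm) (phic y).
Let KBphi_dy x y := madd (mmul (mmul (Kyc x y) Bm) (phic y))
  (mmul (Kc x y) (msub (mscal (0, rho) (phic y)) (mmul (Pc y) (phic y)))).

Lemma is_mderive_KBphi x y : 0 < y < x -> is_mderive (KBphi x) y (KBphi_dy x y).
Proof.
  intros Hy. destruct (Hphi_eq y (proj1 Hy)) as [D [HD HDe]].
  apply is_mderive_of_mderiv0 in HD; [|lra].
  assert (Hom : Omega (x, y)) by (unfold Omega; simpl; lra).
  apply is_mderive_ext_loc with (F := fun t => mmul (mmul (K x t) Bm) (phi t)).
  { eapply filter_imp;
      [|apply filter_and; [apply (locally_gt y 0 (proj1 Hy)) | apply (locally_lt y x (proj2 Hy))]].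
    intros t [Ht1 Ht2]. unfold KBphi, Kc, phic. now rewrite clamp_fst_eq, Rmax0_eq by lra. }
  eapply is_mderive_eq.
  - apply is_mderive_mmul; [|exact HD].
    apply is_mderive_mmul;
      [apply is_mderive_of_mderiv, (proj2 (HK_der x y Hom)) | apply is_mderive_const].
  - unfold KBphi_dy, Kyc, Kc, phic, Pc. rewrite clamp_fst_eq, Rmax0_eq by lra.
    rewrite (Bm_mmul_solve _ _ _ HDe). meq.
Qed.

Lemma KBphi_dy_continuous x : mcontinuous (KBphi_dy x).
Proof.
  intros t.
  assert (HK := mcontinuous_pt_of_2d_r _ _ _ (Kc_continuity_2d x t)).
  assert (HKy := mcontinuous_pt_of_2d_r _ _ _ (Kyc_continuity_2d x t)).
  assert (Hphic := phic_continuous t).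
  apply mcontinuous_pt_madd.
  - apply mcontinuous_pt_mmul; [|exact Hphic].
    apply mcontinuous_pt_mmul; [exact HKy | apply mcontinuous_pt_const].
  - apply mcontinuous_pt_mmul; [exact HK|]. apply mcontinuous_pt_madd.
    + apply mcontinuous_pt_mscal; [apply ccontinuous_pt_const | exact Hphic].
    + apply mcontinuous_pt_mopp, mcontinuous_pt_mmul; [apply Pc_continuous | exact Hphic].
Qed.

(* Integration by parts in y; the boundary term at y = 0 vanishes because K(x,0) B Q = 0. *)
Lemma mint_KBphi_dy x : 0 < x -> mint (KBphi_dy x) 0 x = mmul (mmul (K x x) Bm) (phi x).
Proof.
  intros Hx.
  assert (Hc : forall t, mcontinuous_pt (KBphi x) t).
  { intros t. apply mcontinuous_pt_mmul; [apply mcontinuous_pt_mmul|].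
    - apply mcontinuous_pt_of_2d_r, Kc_continuity_2d.
    - apply mcontinuous_pt_const.
    - apply phic_continuous. }
  rewrite (mint_derive (KBphi x) (KBphi_dy x) 0 x); auto.
  - unfold KBphi, Kc, phic. rewrite (clamp_fst_eq x x), (clamp_fst_eq x 0), !Rmax0_eq by lra.
    rewrite Hphi0, HK_bc by lra. meq.
  - intros t Ht. apply is_mderive_KBphi. lra.
  - apply KBphi_dy_continuous.
Qed.

Lemma Bm_Kxphi x y : 0 < y < x ->
  mmul Bm (Kxphi x y) = msub (mscal (0, rho) (Kphi x y)) (KBphi_dy x y).
Proof.
  intros Hy. assert (Hom : Omega (x, y)) by (unfold Omega; simpl; lra).
  assert (HKx : mmul Bm (Kx x y) = msub (mmul (K x y) (P y)) (mmul (Ky x y) Bm)).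
  { transitivity (msub (madd (madd (madd (mmul Bm (Kx x y)) (mmul (Ky x y) Bm))
                                   (msub (mmul (Pzero x) (K x y)) (mmul (K x y) (P y))))
                             (mmul (K x y) (P y)))
                       (madd (mmul (Ky x y) Bm) (mmul mzero (K x y))));
      [|rewrite HK_pde by exact Hom]; unfold Pzero; meq. }
  unfold Kxphi, Kphi, KBphi_dy, Kxc, Kc, Kyc, phic, Pc. rewrite clamp_fst_eq, Rmax0_eq by lra.
  rewrite <- mmul_assoc, HKx. meq.
Qed.

Lemma Bm_mint_Kxphi x : 0 < x ->
  mmul Bm (mint (Kxphi x) 0 x) = msub (mscal (0, rho) (I x)) (mmul (mmul (K x x) Bm) (phi x)).
Proof.
  intros Hx.
  assert (HKphi : mcontinuous (Kphi x))
    by (intros t; apply mcontinuous_pt_of_2d_r, Kphi_continuity_2d).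
  rewrite <- mint_mmul_l by (intros t; apply mcontinuous_pt_of_2d_r, Kxphi_continuity_2d).
  rewrite (mint_ext _ (fun y => madd (mscal (0, rho) (Kphi x y)) (mopp (KBphi_dy x y)))).
  2: { intros t Ht. rewrite Rmin_left, Rmax_right in Ht by lra. now rewrite Bm_Kxphi by lra. }
  rewrite mint_madd.
  - rewrite mint_mscal, mint_mopp, mint_KBphi_dy, I_clamped
      by (lra || apply KBphi_dy_continuous || exact HKphi).
    reflexivity.
  - intros t. apply mcontinuous_pt_mscal; [apply ccontinuous_pt_const | apply HKphi].
  - intros t. apply mcontinuous_pt_mopp, KBphi_dy_continuous.
Qed.

Let g x := madd (mmul (Rmat P Pzero x) (phi x)) (I x).

Lemma is_mderive_g x : 0 < x -> exists Dg, is_mderive g x Dg /\ Dg = mmul Bm (mscal (0, rho) (g x)).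
Proof.
  intros Hx.
  destruct (is_mderive_Rmat P Pzero HP (fun y _ => mcont0_Pzero y) x Hx) as [dR HdR].
  destruct (Hphi_eq x Hx) as [Dphi [HDphi HDphi_eq]]. apply is_mderive_of_mderiv0 in HDphi; auto.
  eexists. split.
  { apply is_mderive_madd; [|now apply is_mderive_I].
    apply is_mderive_mmul; [exact HdR | exact HDphi]. }
  assert (HdR_eq : dR = mmul Bm (madd (msub (mmul (K x x) Bm) (mmul Bm (K x x)))
                                       (mmul (Rmat P Pzero x) (P x)))).
  { rewrite (HK_diag x ltac:(lra) dR (mderiv0_of_is_mderive _ _ _ HdR)). unfold Pzero, Bm. meq. }
  assert (HBB : mint (Kxphi x) 0 x = mmul Bm (mmul Bm (mint (Kxphi x) 0 x))) by (unfold Bm; meq).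
  rewrite HdR_eq, (Bm_mmul_solve _ _ _ HDphi_eq), HBB, Bm_mint_Kxphi by exact Hx.
  unfold g, Kphi, Kc, phic. rewrite clamp_fst_eq, Rmax0_eq by lra.
  rewrite !Rmat_eq. unfold Rmat_of.
  set (e := cexp _). set (c := ccosh _). set (s := csinh _).
  unfold Bm. meq.
Qed.

Lemma mcontinuous_pt_g_clamp0 : mcontinuous_pt (fun t => g (Rmax 0 t)) 0.
Proof.
  apply mcontinuous_pt_madd.
  - apply mcontinuous_pt_mmul.
    + apply mcontinuous_pt_Rmat_clamp0; [exact HP | intros y _; apply mcont0_Pzero].
    + apply mcontinuous_pt_clamp0; [lra | apply Hphi_cont; lra].
  - apply (mcontinuous_pt_ext (fun u => mint (Kphi (Rmax 0 u)) 0 (Rmax 0 u))).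
    { intros u. symmetry. apply I_clamped, Rmax_l. }
    apply mcontinuous_pt_mint_diag_0. apply Kphi_continuity_2d.
Qed.

Lemma transformation_identity S : is_sol Pzero Q (0, rho) S -> forall x, 0 <= x ->
  S x = madd (mmul (Rmat P Pzero x) (phi x)) (mint (fun y => mmul (K x y) (phi y)) 0 x).
Proof.
  intros (HS0 & HS_cont & HS_eq) x Hx. apply msub_eq0.
  apply (Bm_rotation_zero (fun t => msub (S t) (g t)) rho); auto.
  - intros t Ht. destruct (is_mderive_g t Ht) as [Dg [HDg ->]].
    destruct (HS_eq t Ht) as [DS [HDS HDS_eq]]. apply is_mderive_of_mderiv0 in HDS; auto.
    exists (madd DS (mopp (mmul Bm (mscal (0, rho) (g t))))). split.
    + now apply is_mderive_madd, is_mderive_mopp.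
    + rewrite (Bm_mmul_solve _ _ _ HDS_eq). unfold Pzero, Bm. meq.
  - apply mcontinuous_pt_madd; [apply mcontinuous_pt_clamp0; [lra | apply HS_cont; lra]|].
    apply mcontinuous_pt_mopp, mcontinuous_pt_g_clamp0.
  - unfold g, I. rewrite HS0, Hphi0, Rmat_0, mint_point. meq.
Qed.

End Transformation.

(** * Conjugate transposition *)

Definition mstar (X : M2) := mconj (mtr X).

Ltac meq_re_im := apply M2_ext; simpl; apply C_ext; simpl; ring.

Lemma mstar_mmul X Y : mstar (mmul X Y) = mmul (mstar Y) (mstar X).
Proof. meq_re_im. Qed.

Lemma mstar_madd X Y : mstar (madd X Y) = madd (mstar X) (mstar Y).
Proof. meq_re_im. Qed.

Lemma mstar_mopp X : mstar (mopp X) = mopp (mstar X).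
Proof. meq_re_im. Qed.

Lemma mstar_mscal c X : mstar (mscal c X) = mscal (Cconj c) (mstar X).
Proof. meq_re_im. Qed.

Lemma mstar_Bm : mstar Bm = Bm.
Proof. meq_re_im. Qed.

Lemma mstar_involutive X : mstar (mstar X) = X.
Proof. meq_re_im. Qed.

Lemma filterlim_Cconj {T} (F : (T -> Prop) -> Prop) {FF : Filter F} (g : T -> C) z :
  filterlim g F (locally z) -> filterlim (fun t => Cconj (g t)) F (locally (Cconj z)).
Proof.
  intros H. apply filterlim_locally. intros eps.
  eapply filter_imp; [|apply (proj1 (filterlim_locally _ _) H eps)].
  intros t Ht. rewrite ball_C in *. simpl. destruct Ht as [H1 H2]. split; auto.
  now replace (- snd (g t) - - snd z) with (- (snd (g t) - snd z)) by ring; rewrite Rabs_Ropp.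
Qed.

Lemma filterlim_Copp {T} (F : (T -> Prop) -> Prop) {FF : Filter F} (g : T -> C) z :
  filterlim g F (locally z) -> filterlim (fun t => Copp (g t)) F (locally (Copp z)).
Proof.
  intros H. apply filterlim_locally. intros eps.
  eapply filter_imp; [|apply (proj1 (filterlim_locally _ _) H eps)].
  intros t Ht. rewrite ball_C in *. simpl. destruct Ht as [H1 H2].
  replace (- fst (g t) - - fst z) with (- (fst (g t) - fst z)) by ring.
  replace (- snd (g t) - - snd z) with (- (snd (g t) - snd z)) by ring.
  now rewrite !Rabs_Ropp.
Qed.

Lemma mcont0_mstar f x : mcont0 f x -> mcont0 (fun t => mstar (f t)) x.
Proof.
  intros H e He. simpl in He.
  destruct He as [<-|[<-|[<-|[<-|[]]]]]; simpl; apply filterlim_Cconj; try apply _;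
    [apply (H _ In_m11) | apply (H _ In_m21) | apply (H _ In_m12) | apply (H _ In_m22)].
Qed.

Lemma mcont0_mopp_mstar f x : mcont0 f x -> mcont0 (fun t => mopp (mstar (f t))) x.
Proof.
  intros H e He. simpl in He.
  destruct He as [<-|[<-|[<-|[<-|[]]]]]; simpl;
    apply filterlim_Copp; try apply _; apply filterlim_Cconj; try apply _;
    [apply (H _ In_m11) | apply (H _ In_m21) | apply (H _ In_m12) | apply (H _ In_m22)].
Qed.

Lemma is_mderive_mstar F x D : is_mderive F x D -> is_mderive (fun t => mstar (F t)) x (mstar D).
Proof. intros (H1 & H2 & H3 & H4). split4; simpl; now apply is_cderive_conj. Qed.

(* The conjugate of the spectral parameter (0, rho) is (0, - rho), and the sign change of
   the equation turns it back into (0, rho). *)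
Lemma is_sol_mstar_of_is_sol_tilde P0 P1 Q rho f :
  (forall x, P1 x = mopp (mstar (P0 x))) ->
  is_sol_tilde P0 Q (0, rho) f -> is_sol P1 (mstar Q) (0, rho) (fun t => mstar (f t)).
Proof.
  intros HP (H0 & Hc & Hd). split; [|split].
  - now rewrite H0.
  - intros x Hx. now apply mcont0_mstar, Hc.
  - intros x Hx. destruct (Hd x Hx) as [D [HD HE]]. exists (mstar D). split.
    + now apply mderiv0_of_is_mderive, is_mderive_mstar, is_mderive_of_mderiv0.
    + apply (f_equal mstar) in HE.
      rewrite mstar_madd, mstar_mopp, !mstar_mmul, mstar_Bm, mstar_mscal in HE.
      rewrite HP.
      transitivity (mopp (madd (mopp (mmul Bm (mstar D))) (mmul (mstar (P0 x)) (mstar (f x))))).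
      * meq.
      * rewrite HE. meq_re_im.
Qed.

Lemma mstar_Rmat_of a b : mstar (Rmat_of a b) = Rmat_of (Cconj a) (Cconj b).
Proof.
  unfold mstar, Rmat_of, ccosh, csinh, cexp, Re, Im. apply M2_ext; simpl; apply C_ext; simpl;
    rewrite ?Ropp_involutive, ?Ropp_0, ?cos_neg, ?sin_neg; ring.
Qed.

Lemma cint_conj_clamp0 f g x : 0 <= x -> (forall t, ccontinuous_pt (fun s => g (Rmax 0 s)) t) ->
  (forall s, f s = Cconj (g s)) -> cint f 0 x = Cconj (cint g 0 x).
Proof.
  intros Hx Hg Hfg.
  rewrite (cint_ext f (fun s => Cconj (g (Rmax 0 s)))), (cint_ext g (fun s => g (Rmax 0 s)) 0 x).
  - now apply cint_conj.
  - intros t Ht. rewrite Rmin_left, Rmax_right in Ht by lra. now rewrite Rmax0_eq by lra.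
  - intros t Ht. rewrite Rmin_left, Rmax_right in Ht by lra. now rewrite Hfg, Rmax0_eq by lra.
Qed.

Lemma mstar_Rmat P x : (forall y, 0 <= y -> mcont0 P y) -> 0 <= x ->
  mstar (Rmat (fun s => mopp (mstar (P s))) Pzero x) = Rmat Pzero P x.
Proof.
  intros HP Hx.
  assert (HPc := mcontinuous_clamp0 P HP).
  assert (Hq : forall (e1 e2 : M2 -> C),
            (forall t, ccontinuous_pt (fun s => e1 (P (Rmax 0 s))) t) ->
            (forall t, ccontinuous_pt (fun s => e2 (P (Rmax 0 s))) t) ->
            forall t, ccontinuous_pt
              (fun s => e1 (P (Rmax 0 s)) + e2 (P (Rmax 0 s)) - m11 mzero - m11 mzero)%C t).
  { intros e1 e2 H1 H2 t. repeat apply ccontinuous_pt_minus; try apply ccontinuous_pt_const.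
    now apply ccontinuous_pt_plus. }
  rewrite !Rmat_eq, mstar_Rmat_of. unfold theta1, theta2. f_equal.
  - rewrite (cint_conj_clamp0 _
               (fun s => m12 (P s) + m21 (P s) - m12 (Pzero s) - m21 (Pzero s))%C x);
      [apply C_ext; simpl; ring | exact Hx | apply (Hq m12 m21); intros t; apply HPc |].
    intros s; apply C_ext; simpl; ring.
  - rewrite (cint_conj_clamp0 _
               (fun s => m11 (P s) + m22 (P s) - m11 (Pzero s) - m22 (Pzero s))%C x);
      [apply C_ext; simpl; ring | exact Hx | apply (Hq m11 m22); intros t; apply HPc |].
    intros s; apply C_ext; simpl; ring.
Qed.

Lemma mstar_mint (F Fc : R -> M2) x : 0 <= x -> mcontinuous Fc ->
  (forall y, 0 < y < x -> F y = Fc y) -> mstar (mint F 0 x) = mint (fun y => mstar (F y)) 0 x.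
Proof.
  intros Hx HFc HE.
  rewrite (mint_ext F Fc), (mint_ext (fun y => mstar (F y)) (fun y => mstar (Fc y))).
  - unfold mstar. now rewrite mint_mconj_mtr.
  - intros t Ht; rewrite Rmin_left, Rmax_right in Ht by lra; now rewrite HE.
  - intros t Ht; rewrite Rmin_left, Rmax_right in Ht by lra; now rewrite HE.
Qed.

Lemma sol_transformation P Q rho phi S K : (forall x, 0 <= x -> mcont0 P x) ->
  is_sol P Q (0, rho) phi -> is_sol Pzero Q (0, rho) S -> is_kernel P Pzero Q K ->
  forall x, 0 <= x ->
  S x = madd (mmul (Rmat P Pzero x) (phi x)) (mint (fun y => mmul (K x y) (phi y)) 0 x).
Proof.
  intros HP (Hphi0 & Hphi_cont & Hphi_eq) HS
    ((Kx & Ky & HK_cont & HK_der & HK_pde) & HK_bc & HK_diag).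
  now apply (transformation_identity P Q rho phi K Kx Ky).
Qed.

Lemma sol_tilde_transformation P Q rho phit St Kt : (forall x, 0 <= x -> mcont0 P x) ->
  is_sol_tilde P Q (0, rho) phit -> is_sol_tilde Pzero Q (0, rho) St ->
  is_kernel (fun s => mopp (mstar (P s))) Pzero (mstar Q) Kt -> forall x, 0 <= x ->
  St x = madd (mmul (phit x) (Rmat Pzero P x)) (mint (fun y => mmul (phit y) (mstar (Kt x y))) 0 x).
Proof.
  intros HP Hphit HSt HKt x Hx.
  assert (HP' : forall y, 0 <= y -> mcont0 (fun s => mopp (mstar (P s))) y)
    by (intros y Hy; now apply mcont0_mopp_mstar, HP).
  assert (HSt' : is_sol Pzero (mstar Q) (0, rho) (fun t => mstar (St t))).
  { apply (is_sol_mstar_of_is_sol_tilde Pzero); [|exact HSt]. intros; unfold Pzero. meq_re_im. }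
  assert (E := sol_transformation _ _ _ _ _ Kt HP'
                 (is_sol_mstar_of_is_sol_tilde _ _ _ _ _ (fun _ => eq_refl) Hphit) HSt' HKt x Hx).
  apply (f_equal mstar) in E.
  rewrite mstar_involutive, mstar_madd, mstar_mmul, mstar_involutive, mstar_Rmat in E by assumption.
  rewrite E. f_equal.
  destruct HKt as ((Ktx & Kty & HKt_cont & _) & _).
  rewrite (mstar_mint _ (fun y => mmul (Kt (clamp_fst x y) (Rmax 0 y)) (mstar (phit (Rmax 0 y))))).
  - apply mint_ext. intros y _. now rewrite mstar_mmul, mstar_involutive.
  - exact Hx.
  - intros t. apply mcontinuous_pt_mmul.
    + apply (mcontinuous_pt_of_2d_r (fun a b => Kt (clamp_fst a b) (Rmax 0 b))).
      apply mcontinuity_2d_pt_clamp. intros a b Hab. apply (HKt_cont a b Hab).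
    + apply (mcontinuous_clamp0 (fun t => mstar (phit t))). intros y Hy.
      apply mcont0_mstar. now destruct Hphit as (_ & Hc & _); apply Hc.
  - intros y Hy. now rewrite clamp_fst_eq, Rmax0_eq by lra.
Qed.

Lemma mmul_Q_of_boundary Q K0 :
  madd (mmul Q Bm) (mmul Bm Q) = Bm -> mmul (mmul K0 Bm) Q = mzero -> mmul K0 Q = K0.
Proof.
  intros HQ H.
  assert (E : mmul Bm Q = msub Bm (mmul Q Bm)) by (rewrite <- HQ at 2; meq).
  transitivity (madd (mmul K0 Q) (mmul (mmul (mmul K0 Bm) Q) Bm)).
  - rewrite H. meq.
  - rewrite (mmul_assoc K0 Bm Q), E. unfold Bm. meq.
Qed.

Lemma mstar_anticomm_Bm Q :
  madd (mmul Q Bm) (mmul Bm Q) = Bm -> madd (mmul (mstar Q) Bm) (mmul Bm (mstar Q)) = Bm.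
Proof.
  intros HQ. apply (f_equal mstar) in HQ.
  rewrite mstar_madd, !mstar_mmul, mstar_Bm in HQ. rewrite <- HQ at 3. meq.
Qed.

Theorem corollary2p3
  (P : R -> M2) (Q : M2)
  (HP : C1_nonneg P)
  (HQB : madd (mmul Q Bm) (mmul Bm Q) = Bm)
  (HQQ : mmul Q Q = Q)
  (phi phit S St : C -> R -> M2)
  (Hphi : forall lam, is_sol P Q lam (phi lam))
  (Hphit : forall lam, is_sol_tilde P Q lam (phit lam))
  (HS : forall lam, is_sol Pzero Q lam (S lam))
  (HSt : forall lam, is_sol_tilde Pzero Q lam (St lam))
  (K : R -> R -> M2) (HK : is_kernel P Pzero Q K)
  (Kt : R -> R -> M2)
  (HKt : is_kernel (fun s => mopp (mconj (mtr (P s)))) Pzero (mconj (mtr Q)) Kt) :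
  forall (rho x : R), 0 <= x ->
    let irho := (0, rho) : C in
    (* (1) *)
    S irho x = madd (mmul (Rmat P Pzero x) (phi irho x))
                    (mint (fun y => mmul (K x y) (phi irho y)) 0 x) /\
    mmul (K x 0) Q = K x 0 /\
    (forall dR, mderiv0 (Rmat P Pzero) x dR ->
       msub (mmul (K x x) Bm) (mmul Bm (K x x)) =
       msub (mmul Bm dR) (mmul (Rmat P Pzero x) (P x))) /\
    (* (2) *)
    St irho x = madd (mmul (phit irho x) (Rmat Pzero P x))
                     (mint (fun y => mmul (phit irho y) (mconj (mtr (Kt x y)))) 0 x) /\
    mmul Q (mconj (mtr (Kt x 0))) = mconj (mtr (Kt x 0)).
Proof.
  intros rho x Hx irho.
  assert (HPc := mcont0_of_C1_nonneg P HP).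
  pose proof HK as (_ & HK_bc & HK_diag).
  pose proof HKt as (_ & HKt_bc & _).
  split; [|split; [|split; [|split]]].
  - now apply (sol_transformation P Q rho (phi irho) (S irho) K).
  - exact (mmul_Q_of_boundary Q (K x 0) HQB (HK_bc x Hx)).
  - intros dR HdR. rewrite (HK_diag x Hx dR HdR). unfold Pzero. meq.
  - now apply (sol_tilde_transformation P Q rho (phit irho) (St irho) Kt).
  - assert (E := mmul_Q_of_boundary (mstar Q) (Kt x 0) (mstar_anticomm_Bm Q HQB) (HKt_bc x Hx)).
    apply (f_equal mstar) in E. rewrite mstar_mmul, mstar_involutive in E. exact E.
Qed.
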